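(* Let $\vartheta$ be a primitive semi-compatible random substitution with topological entropy $s$. If $\vartheta$ satisfies the identical set condition, then $s=\frac{1}{\lambda}\bm q_1^\intercal\bm R$. If $\vartheta$ satisfies the disjoint set condition, then $s=\frac{1}{\lambda-1}\bm q_1^\intercal\bm R$.
   Context: Let $\mathcal A=\{a_1,\dots,a_n\}$ be a finite alphabet, $\mathcal A^+$ the finite non-empty words over $\mathcal A$. A random substitution is a map $\vartheta$ from $\mathcal A$ to finite non-empty subsets of $\mathcal A^+$, extended to words by $\vartheta(u_1\cdots u_m)=\{w_1\cdots w_m: w_k\in\vartheta(u_k)\}$ and to sets of words by unions; powers $\vartheta^m$ are compositions. $|u|_a$ is the number of occurrences of letter $a$ in $u$; $\Phi(u)=(|u|_{a_1},\dots,|u|_{a_n})^\intercal$. $\vartheta$ is semi-compatible if for each $a$ all words in $\vartheta(a)$ have the same $\Phi$. Substitution matrix $M_{ij}=|u|_{a_i}$, $u\in\vartheta(a_j)$; primitive means $M$ primitive, with Perron–Frobenius eigenvalue $\lambda$ and right PF eigenvector $\bm R$, $\|\bm R\|_1=1$. $\bm q_1=(\log\#\vartheta(a_1),\dots,\log\#\vartheta(a_n))^\intercal$. The language $\mathcal L$ is the set of all subwords of words in $\vartheta^m(a)$, $a\in\mathcal A$, $m\in\mathbb N$; $\mathcal L_\ell$ its words of length $\ell$; topological entropy $s=\lim_{\ell\to\infty}\frac1\ell\log\#\mathcal L_\ell$. Identical set condition: for all $i$, $m\in\mathbb N$, $u,v\in\vartheta(a_i)$: $\vartheta^m(u)=\vartheta^m(v)$.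 Disjoint set condition: for all $i$, $m\in\mathbb N$, $u\neq v\in\vartheta(a_i)$: $\vartheta^m(u)\cap\vartheta^m(v)=\varnothing$. *)

(* words are lists of letters, letters a_1..a_n are 0..n-1. *)
From Stdlib Require Import Reals List Arith.
Import ListNotations.
Open Scope R_scope.

(* A random substitution: each letter is sent to a finite set of words,
   represented by a duplicate-free list. *)
Definition rsubst := nat -> list (list nat).

Fixpoint subst_word (th : rsubst) (u : list nat) : list (list nat) :=
  match u with
  | [] => [ [] ]
  | a :: u' => flat_map (fun w => map (fun v => w ++ v) (subst_word th u')) (th a)
  end.

Definition subst_set (th : rsubst) (S : list (list nat)) : list (list nat) :=
  flat_map (subst_word th) S.

Fixpoint subst_pow (th : rsubst) (m : nat) (u : list nat) : list (list nat) :=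
  match m with
  | O => [u]
  | S k => subst_set th (subst_pow th k u)
  end.

Definition occ (a : nat) (u : list nat) : nat := count_occ Nat.eq_dec u a.

Definition is_random_subst (n : nat) (th : rsubst) : Prop :=
  forall a, (a < n)%nat ->
    th a <> [] /\ NoDup (th a) /\
    (forall w, In w (th a) -> w <> [] /\ forall b, In b w -> (b < n)%nat).

Definition semi_compatible (n : nat) (th : rsubst) : Prop :=
  forall a, (a < n)%nat -> forall u v, In u (th a) -> In v (th a) ->
    forall b, occ b u = occ b v.

(* substitution matrix M_ij = |u|_{a_i}, u in theta(a_j) *)
Definition subst_matrix (th : rsubst) (i j : nat) : nat := occ i (hd [] (th j)).

Fixpoint nsum (n : nat) (f : nat -> nat) : nat :=
  match n with O => O | S k => (nsum k f + f k)%nat end.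

Fixpoint rsum (n : nat) (f : nat -> R) : R :=
  match n with O => 0 | S k => rsum k f + f k end.

Fixpoint mat_pow (n : nat) (M : nat -> nat -> nat) (k : nat) : nat -> nat -> nat :=
  match k with
  | O => fun i j => if Nat.eqb i j then 1%nat else 0%nat
  | S k' => fun i j => nsum n (fun l => (mat_pow n M k' i l * M l j)%nat)
  end.

Definition primitive_mx (n : nat) (M : nat -> nat -> nat) : Prop :=
  exists k, (1 <= k)%nat /\ forall i j, (i < n)%nat -> (j < n)%nat -> (0 < mat_pow n M k i j)%nat.

(* For primitive_mx M this pair
   is unique by the Perron-Frobenius theorem. *)
Definition PF_pair (n : nat) (M : nat -> nat -> nat) (lam : R) (Rv : nat -> R) : Prop :=
  (forall i, (i < n)%nat -> 0 < Rv i) /\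
  rsum n Rv = 1 /\
  (forall i, (i < n)%nat -> rsum n (fun j => INR (M i j) * Rv j) = lam * Rv i).

Definition q1 (th : rsubst) (i : nat) : R := ln (INR (length (th i))).

Definition subword (w v : list nat) : Prop := exists p s, p ++ w ++ s = v.

Definition in_language (n : nat) (th : rsubst) (w : list nat) : Prop :=
  exists a m v, (a < n)%nat /\ In v (subst_pow th m [a]) /\ subword w v.

Definition card_lang (n : nat) (th : rsubst) (l c : nat) : Prop :=
  exists L : list (list nat), NoDup L /\ length L = c /\
    forall w, In w L <-> (in_language n th w /\ length w = l).

Definition top_entropy (n : nat) (th : rsubst) (s : R) : Prop :=
  (exists c : nat -> nat, forall l, card_lang n th l (c l)) /\
  forall c : nat -> nat, (forall l, card_lang n th l (c l)) ->
    Un_cv (fun l => ln (INR (c l)) / INR l) s.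

Definition identical_set_cond (n : nat) (th : rsubst) : Prop :=
  forall a, (a < n)%nat -> forall m, (1 <= m)%nat -> forall u v,
    In u (th a) -> In v (th a) ->
    forall w, In w (subst_pow th m u) <-> In w (subst_pow th m v).

Definition disjoint_set_cond (n : nat) (th : rsubst) : Prop :=
  forall a, (a < n)%nat -> forall m, (1 <= m)%nat -> forall u v,
    In u (th a) -> In v (th a) -> u <> v ->
    forall w, ~ (In w (subst_pow th m u) /\ In w (subst_pow th m v)).

(* Semi-compatibility makes all words of [theta^m(a)] have the letter counts of the [a]-th
   column of [M^m], so their common length is a column sum of [M^m] and [#theta^m(u)] is the
   product of the [#theta^m(b)] over the letters [b] of [u]. Hence the vector of
   [log #theta^m(a)] satisfies [E_{m+1} = E_m M] under the identical set condition and
   [E_{m+1} = q1 + E_m M] under the disjoint set condition, while the lengths satisfy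
   [L_{m+1} = L_m M]. For a primitive [M] the ratio of two such orbits converges to the ratio
   of their pairings with the right PF eigenvector [R] (each [p]-step contracts the spread of
   the ratios by a fixed factor); in the disjoint case [E_m] is a sum of orbits of [q1], and a
   Stolz-Cesaro argument produces the factor [1 / (lam - 1)]. So [log #theta^m(a) / |theta^m(a)|]
   tends to [rho = q1.R / lam], resp. [q1.R / (lam - 1)].
   Finally [log #L_l] is subadditive: the legal words [theta^m(a)] give [s >= rho], and reading
   every legal word of length [k] as a window of a word of [theta^m(v)], for a short seed [v],
   gives [s <= rho]. If [lam <= 1], [theta] maps letters to single letters, [q1 = 0] and the
   language has no word of length [2]. *)

From Stdlib Require Import Reals List Arith.
Open Scope R_scope.
From Stdlib Require Import Lia Lra ClassicalEpsilon.
Import ListNotations.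

Section SubstitutionAlgebra.
Variable th : rsubst.

Definition cat_set (X Y : list (list nat)) : list (list nat) :=
  flat_map (fun x => map (fun y => x ++ y) Y) X.

Lemma in_cat_set X Y w :
  In w (cat_set X Y) <-> exists x y, w = x ++ y /\ In x X /\ In y Y.
Proof.
  unfold cat_set; rewrite in_flat_map; split.
  - intros [x [Hx Hw]]; apply in_map_iff in Hw; destruct Hw as [y [<- Hy]]; eauto.
  - intros [x [y [-> [Hx Hy]]]]; exists x; split; auto; apply in_map_iff; eauto.
Qed.

Lemma subst_word_cons a u : subst_word th (a :: u) = cat_set (th a) (subst_word th u).
Proof. reflexivity. Qed.

Lemma in_subst_word_app u v w :
  In w (subst_word th (u ++ v)) <->
  exists w1 w2, w = w1 ++ w2 /\ In w1 (subst_word th u) /\ In w2 (subst_word th v).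
Proof.
  revert w; induction u as [|a u IH]; intros w; simpl app.
  - simpl; split.
    + intros H; exists [], w; simpl; auto.
    + intros [w1 [w2 [-> [[<-|[]] H2]]]]; exact H2.
  - rewrite subst_word_cons, in_cat_set; split.
    + intros [x [y [-> [Hx Hy]]]]. apply IH in Hy. destruct Hy as [w1 [w2 [-> [H1 H2]]]].
      exists (x ++ w1), w2; split; [now rewrite app_assoc|split; auto].
      rewrite subst_word_cons, in_cat_set; eauto.
    + intros [w1 [w2 [-> [H1 H2]]]]. rewrite subst_word_cons, in_cat_set in H1.
      destruct H1 as [x [y [-> [Hx Hy]]]]. exists x, (y ++ w2); split; [now rewrite app_assoc|].
      split; auto. apply IH; eauto.
Qed.

Lemma in_subst_word_single a w : In w (subst_word th [a]) <-> In w (th a).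
Proof.
  rewrite subst_word_cons, in_cat_set; simpl; split.
  - intros [x [y [-> [Hx [<-|[]]]]]]; now rewrite app_nil_r.
  - intros H; exists w, []; rewrite app_nil_r; auto.
Qed.

Lemma in_subst_set S w : In w (subst_set th S) <-> exists v, In v S /\ In w (subst_word th v).
Proof. unfold subst_set; rewrite in_flat_map; split; intros [v [? ?]]; eauto. Qed.

Lemma in_subst_pow_app m u v w :
  In w (subst_pow th m (u ++ v)) <->
  exists w1 w2, w = w1 ++ w2 /\ In w1 (subst_pow th m u) /\ In w2 (subst_pow th m v).
Proof.
  revert w; induction m as [|m IH]; intros w; simpl.
  - split.
    + intros [<-|[]]; exists u, v; auto.
    + intros [w1 [w2 [-> [[<-|[]] [<-|[]]]]]]; auto.
  - rewrite in_subst_set; split.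
    + intros [z [Hz Hw]]. apply IH in Hz. destruct Hz as [z1 [z2 [-> [H1 H2]]]].
      apply in_subst_word_app in Hw. destruct Hw as [w1 [w2 [-> [Hw1 Hw2]]]].
      exists w1, w2; repeat split; auto; apply in_subst_set; eauto.
    + intros [w1 [w2 [-> [H1 H2]]]]. apply in_subst_set in H1, H2.
      destruct H1 as [z1 [Hz1 Hw1]]; destruct H2 as [z2 [Hz2 Hw2]].
      exists (z1 ++ z2); split; [apply IH; eauto|apply in_subst_word_app; eauto].
Qed.

Lemma in_subst_pow_cons m a u w :
  In w (subst_pow th m (a :: u)) <->
  exists w1 w2, w = w1 ++ w2 /\ In w1 (subst_pow th m [a]) /\ In w2 (subst_pow th m u).
Proof. apply (in_subst_pow_app m [a] u). Qed.

Lemma in_subst_pow_add i k u w :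
  In w (subst_pow th (i + k) u) <-> exists v, In v (subst_pow th k u) /\ In w (subst_pow th i v).
Proof.
  revert w; induction i as [|i IH]; intros w; simpl.
  - split; [intros H; exists w; auto| intros [v [Hv [<-|[]]]]; auto].
  - rewrite in_subst_set; split.
    + intros [z [Hz Hw]]; apply IH in Hz; destruct Hz as [v [Hv Hz]].
      exists v; split; auto; apply in_subst_set; eauto.
    + intros [v [Hv Hw]]; apply in_subst_set in Hw; destruct Hw as [z [Hz Hw]].
      exists z; split; auto; apply IH; eauto.
Qed.

Lemma in_subst_pow_S m u w :
  In w (subst_pow th (S m) u) <-> exists v, In v (subst_word th u) /\ In w (subst_pow th m v).
Proof.
  replace (S m) with (m + 1)%nat by lia. rewrite in_subst_pow_add.
  change (subst_pow th 1 u) with (subst_set th [u]).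
  split; intros [v [Hv Hw]]; exists v; split; auto.
  - apply in_subst_set in Hv; destruct Hv as [z [[<-|[]] Hz]]; auto.
  - apply in_subst_set; exists u; simpl; auto.
Qed.

Lemma in_subst_pow_S_letter m a w :
  In w (subst_pow th (S m) [a]) <-> exists v, In v (th a) /\ In w (subst_pow th m v).
Proof.
  rewrite in_subst_pow_S; split; intros [v [Hv Hw]]; exists v; split; auto;
  apply in_subst_word_single; auto.
Qed.

Lemma subst_pow_nil m : subst_pow th m [] = [[]].
Proof. induction m; simpl; auto. rewrite IHm; reflexivity. Qed.

End SubstitutionAlgebra.

Lemma nsum_ext n f g : (forall i, (i < n)%nat -> f i = g i) -> nsum n f = nsum n g.
Proof. induction n; simpl; intros H; auto. rewrite IHn, H; auto. Qed.

Lemma nsum_add n f g : nsum n (fun i => f i + g i)%nat = (nsum n f + nsum n g)%nat.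
Proof. induction n; simpl; auto. rewrite IHn; lia. Qed.

Lemma nsum_mul_l n c f : nsum n (fun i => c * f i)%nat = (c * nsum n f)%nat.
Proof. induction n; simpl; auto. rewrite IHn; lia. Qed.

Lemma nsum_mul_r n c f : nsum n (fun i => f i * c)%nat = (nsum n f * c)%nat.
Proof. induction n; simpl; auto. rewrite IHn; lia. Qed.

Lemma nsum_swap n m f :
  nsum n (fun i => nsum m (fun j => f i j)) = nsum m (fun j => nsum n (fun i => f i j)).
Proof.
  induction n; simpl.
  - induction m; simpl; auto. rewrite <- IHm; auto.
  - rewrite IHn, <- nsum_add; auto.
Qed.

Lemma nsum_zero n f : (forall i, (i < n)%nat -> f i = 0%nat) -> nsum n f = 0%nat.
Proof. induction n; simpl; intros H; auto. rewrite IHn, H; auto. Qed.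

Lemma nsum_delta n a f :
  nsum n (fun l => f l * (if Nat.eqb l a then 1 else 0))%nat = if Nat.ltb a n then f a else 0%nat.
Proof.
  induction n; simpl; auto. rewrite IHn.
  destruct (Nat.eqb_spec n a) as [->|Hne].
  - rewrite (proj2 (Nat.ltb_ge a a)), (proj2 (Nat.ltb_lt a (S a))); lia.
  - destruct (Nat.ltb_spec a n), (Nat.ltb_spec a (S n)); lia.
Qed.

Lemma nsum_ge_term n f i : (i < n)%nat -> (f i <= nsum n f)%nat.
Proof.
  induction n; simpl; intros Hi; [lia|].
  destruct (Nat.eq_dec i n); subst; [lia|]. specialize (IHn ltac:(lia)); lia.
Qed.

Lemma rsum_ext n f g : (forall i, (i < n)%nat -> f i = g i) -> rsum n f = rsum n g.
Proof. induction n; simpl; intros H; auto. rewrite IHn, H; auto. Qed.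

Lemma rsum_add n f g : rsum n (fun i => f i + g i) = rsum n f + rsum n g.
Proof. induction n; simpl; [lra|]. rewrite IHn; lra. Qed.

Lemma rsum_scal n c f : rsum n (fun i => c * f i) = c * rsum n f.
Proof. induction n; simpl; [lra|]. rewrite IHn; lra. Qed.

Lemma rsum_scal_r n c f : rsum n (fun i => f i * c) = rsum n f * c.
Proof. induction n; simpl; [lra|]. rewrite IHn; lra. Qed.

Lemma rsum_swap n m f :
  rsum n (fun i => rsum m (fun j => f i j)) = rsum m (fun j => rsum n (fun i => f i j)).
Proof.
  induction n; simpl.
  - induction m; simpl; auto. rewrite <- IHm; lra.
  - rewrite IHn, <- rsum_add; auto.
Qed.

Lemma rsum_zero n f : (forall i, (i < n)%nat -> f i = 0) -> rsum n f = 0.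
Proof. induction n; simpl; intros H; auto. rewrite IHn, H; auto; lra. Qed.

Lemma rsum_le n f g : (forall i, (i < n)%nat -> f i <= g i) -> rsum n f <= rsum n g.
Proof.
  induction n; simpl; intros H; [lra|].
  apply Rplus_le_compat; [apply IHn; auto|apply H; lia].
Qed.

Lemma rsum_nonneg n f : (forall i, (i < n)%nat -> 0 <= f i) -> 0 <= rsum n f.
Proof. intros H. rewrite <- (rsum_zero n (fun _ => 0)) by auto. apply rsum_le; auto. Qed.

Lemma rsum_pos n f : (0 < n)%nat -> (forall i, (i < n)%nat -> 0 < f i) -> 0 < rsum n f.
Proof.
  intros Hn H. destruct n; [lia|]. simpl.
  assert (0 <= rsum n f) by (apply rsum_nonneg; intros; apply Rlt_le, H; lia).
  specialize (H n (Nat.lt_succ_diag_r n)). lra.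
Qed.

Lemma rsum_ge_term n f i :
  (forall j, (j < n)%nat -> 0 <= f j) -> (i < n)%nat -> f i <= rsum n f.
Proof.
  induction n; simpl; intros H Hi; [lia|].
  destruct (Nat.eq_dec i n); subst.
  - assert (0 <= rsum n f) by (apply rsum_nonneg; intros; apply H; lia). lra.
  - assert (f i <= rsum n f) by (apply IHn; auto; lia). specialize (H n (Nat.lt_succ_diag_r n)). lra.
Qed.

Lemma rsum_delta n a f :
  (a < n)%nat -> rsum n (fun l => (if Nat.eqb l a then 1 else 0) * f l) = f a.
Proof.
  induction n; simpl; intros Ha; [lia|].
  destruct (Nat.eqb_spec n a) as [->|Hne].
  - rewrite rsum_zero; [lra|]. intros i Hi. destruct (Nat.eqb_spec i a); [lia|lra].
  - rewrite IHn by lia. lra.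
Qed.

Lemma rsum_shift m f : rsum (S m) f = f 0%nat + rsum m (fun j => f (S j)).
Proof. induction m; simpl in *; [lra|]. rewrite IHm; lra. Qed.

Lemma INR_nsum n f : INR (nsum n f) = rsum n (fun i => INR (f i)).
Proof. induction n; simpl; auto. rewrite plus_INR, IHn; auto. Qed.

Definition word_on (n : nat) (w : list nat) : Prop := forall b, In b w -> (b < n)%nat.

Lemma word_on_app n u v : word_on n (u ++ v) <-> word_on n u /\ word_on n v.
Proof.
  unfold word_on; split.
  - intros H; split; intros b Hb; apply H; apply in_or_app; auto.
  - intros [H1 H2] b Hb; apply in_app_or in Hb; destruct Hb; auto.
Qed.

Lemma word_on_cons n a u : word_on n (a :: u) <-> (a < n)%nat /\ word_on n u.
Proof. unfold word_on; simpl; split; [intros H; split; auto|intros [H1 H2] b [<-|Hb]; auto]. Qed.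

Lemma word_on_nil n : word_on n [].
Proof. intros b []. Qed.

Lemma word_on_letter n a : (a < n)%nat -> word_on n [a].
Proof. intros; apply word_on_cons; split; auto; apply word_on_nil. Qed.

Lemma word_on_subword n u v : word_on n v -> subword u v -> word_on n u.
Proof. intros H [p [s <-]] b Hb. apply H. apply in_or_app; right; apply in_or_app; auto. Qed.

Lemma occ_app b u v : occ b (u ++ v) = (occ b u + occ b v)%nat.
Proof. unfold occ; apply count_occ_app. Qed.

Lemma occ_cons b a u : occ b (a :: u) = ((if Nat.eqb b a then 1 else 0) + occ b u)%nat.
Proof. unfold occ; simpl. destruct (Nat.eq_dec a b), (Nat.eqb_spec b a); subst; lia. Qed.

Lemma length_occ n w : word_on n w -> length w = nsum n (fun b => occ b w).
Proof.
  induction w as [|a w IH]; intros H; cbn [length].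
  - symmetry; apply nsum_zero; auto.
  - apply word_on_cons in H; destruct H as [Ha H]. rewrite IH by auto.
    rewrite (nsum_ext n (fun b => occ b (a :: w))
      (fun b => 1 * (if Nat.eqb b a then 1 else 0) + occ b w)%nat)
      by (intros; rewrite occ_cons; lia).
    rewrite nsum_add, nsum_delta. destruct (Nat.ltb_spec a n); lia.
Qed.

Section Abelianisation.
Variable n : nat.
Variable th : rsubst.
Hypothesis Hrs : is_random_subst n th.
Hypothesis Hsc : semi_compatible n th.

Notation M := (subst_matrix th).

Lemma word_on_th a u : (a < n)%nat -> In u (th a) -> word_on n u.
Proof. intros Ha Hu b Hb. exact (proj2 (proj2 (proj2 (Hrs a Ha)) u Hu) b Hb). Qed.

Lemma word_on_subst_word u w : word_on n u -> In w (subst_word th u) -> word_on n w.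
Proof.
  revert w; induction u as [|a u IH]; intros w Hu Hw; simpl in Hw.
  - destruct Hw as [<-|[]]; apply word_on_nil.
  - apply word_on_cons in Hu; destruct Hu as [Ha Hu].
    apply in_cat_set in Hw; destruct Hw as [x [y [-> [Hx Hy]]]].
    apply word_on_app; split; [apply (word_on_th a)|]; eauto.
Qed.

Lemma word_on_subst_pow m u w : word_on n u -> In w (subst_pow th m u) -> word_on n w.
Proof.
  revert w; induction m; intros w Hu Hw.
  - destruct Hw as [<-|[]]; auto.
  - apply in_subst_set in Hw; destruct Hw as [v [Hv Hw]].
    exact (word_on_subst_word v w (IHm v Hu Hv) Hw).
Qed.

Lemma exists_in_th a : (a < n)%nat -> exists x, In x (th a).
Proof. intros Ha. destruct (th a) as [|x l] eqn:E; [now destruct (Hrs a Ha)|exists x; simpl; auto]. Qed.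

Lemma subst_word_nonempty u : word_on n u -> exists w, In w (subst_word th u).
Proof.
  induction u as [|a u IH]; intros Hu; simpl.
  - exists []; auto.
  - apply word_on_cons in Hu; destruct Hu as [Ha Hu]. destruct (IH Hu) as [y Hy].
    destruct (exists_in_th a Ha) as [x Hx]. exists (x ++ y). apply in_cat_set; eauto.
Qed.

Lemma subst_pow_nonempty m u : word_on n u -> exists w, In w (subst_pow th m u).
Proof.
  revert u; induction m; intros u Hu.
  - exists u; simpl; auto.
  - destruct (subst_word_nonempty u Hu) as [v Hv].
    destruct (IHm v (word_on_subst_word u v Hu Hv)) as [w Hw]. exists w.
    apply in_subst_pow_S; eauto.
Qed.

Lemma occ_th a x b : (a < n)%nat -> In x (th a) -> occ b x = M b a.
Proof.
  intros Ha Hx. unfold subst_matrix. destruct (th a) as [|y l] eqn:E; [destruct Hx|].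
  simpl. apply (Hsc a Ha); rewrite E; simpl; auto.
Qed.

Lemma occ_subst_word u w b : word_on n u -> In w (subst_word th u) ->
  occ b w = nsum n (fun l => M b l * occ l u)%nat.
Proof.
  revert w; induction u as [|a u IH]; intros w Hu Hw; simpl in Hw.
  - destruct Hw as [<-|[]]. symmetry; apply nsum_zero; intros; unfold occ; simpl; lia.
  - apply word_on_cons in Hu; destruct Hu as [Ha Hu].
    apply in_cat_set in Hw; destruct Hw as [x [y [-> [Hx Hy]]]].
    rewrite occ_app, (occ_th a x b Ha Hx), (IH y Hu Hy).
    rewrite (nsum_ext n (fun l => M b l * occ l (a :: u))%nat
      (fun l => M b l * (if Nat.eqb l a then 1 else 0) + M b l * occ l u)%nat)
      by (intros; rewrite occ_cons; lia).
    rewrite nsum_add, nsum_delta. destruct (Nat.ltb_spec a n); lia.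
Qed.

Lemma occ_subst_pow m u w b : word_on n u -> In w (subst_pow th m u) ->
  occ b w = nsum n (fun l => mat_pow n M m b l * occ l u)%nat.
Proof.
  revert u w; induction m; intros u w Hu Hw.
  - destruct Hw as [<-|[]]. simpl.
    rewrite (nsum_ext n _ (fun l => occ b u * (if Nat.eqb l b then 1 else 0))%nat).
    + rewrite nsum_delta. destruct (Nat.ltb_spec b n); auto.
      unfold occ. apply count_occ_not_In. intros Hb; apply Hu in Hb; lia.
    + intros l _. destruct (Nat.eqb_spec b l), (Nat.eqb_spec l b); subst; lia.
  - apply in_subst_pow_S in Hw; destruct Hw as [v [Hv Hw]].
    rewrite (IHm v w (word_on_subst_word u v Hu Hv) Hw).
    rewrite (nsum_ext n _ (fun l => nsum n (fun k => mat_pow n M m b l * M l k * occ k u))%nat).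
    + rewrite nsum_swap. apply nsum_ext; intros k _. simpl. rewrite <- nsum_mul_r. auto.
    + intros l _. rewrite (occ_subst_word u v l Hu Hv), <- nsum_mul_l.
      apply nsum_ext; intros; lia.
Qed.

Definition len_pow m c := nsum n (fun b => mat_pow n M m b c).

Lemma occ_subst_pow_letter m c w b : (c < n)%nat -> In w (subst_pow th m [c]) ->
  occ b w = mat_pow n M m b c.
Proof.
  intros Hc Hw. rewrite (occ_subst_pow m [c] w b (word_on_letter n c Hc) Hw).
  rewrite (nsum_ext n _ (fun l => mat_pow n M m b l * (if Nat.eqb l c then 1 else 0))%nat).
  - rewrite nsum_delta. destruct (Nat.ltb_spec c n); lia.
  - intros l _; rewrite occ_cons; unfold occ; simpl; lia.
Qed.

Lemma length_subst_pow_letter m c w : (c < n)%nat -> In w (subst_pow th m [c]) ->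
  length w = len_pow m c.
Proof.
  intros Hc Hw. rewrite (length_occ n w (word_on_subst_pow m [c] w (word_on_letter n c Hc) Hw)).
  apply nsum_ext; intros; apply occ_subst_pow_letter; auto.
Qed.

Lemma len_pow_0 c : (c < n)%nat -> len_pow 0 c = 1%nat.
Proof.
  intros Hc. unfold len_pow; cbn [mat_pow].
  rewrite (nsum_ext n _ (fun b => 1 * (if Nat.eqb b c then 1 else 0))%nat) by (intros; lia).
  rewrite nsum_delta. destruct (Nat.ltb_spec c n); lia.
Qed.

Lemma len_pow_S m c : len_pow (S m) c = nsum n (fun i => M i c * len_pow m i)%nat.
Proof.
  unfold len_pow; simpl. rewrite nsum_swap. apply nsum_ext; intros i _.
  rewrite <- nsum_mul_l. apply nsum_ext; intros; lia.
Qed.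

Lemma len_pow_pos m c : (c < n)%nat -> (1 <= len_pow m c)%nat.
Proof.
  revert c; induction m; intros c Hc.
  - rewrite len_pow_0; auto.
  - destruct (exists_in_th c Hc) as [[|b x] Hx].
    + exfalso. exact (proj1 (proj2 (proj2 (Hrs c Hc)) [] Hx) eq_refl).
    + assert (Hb : (b < n)%nat) by (apply (word_on_th c (b :: x)); simpl; auto).
      assert (HM : (1 <= M b c)%nat).
      { rewrite <- (occ_th c (b :: x) b Hc Hx), occ_cons, Nat.eqb_refl. lia. }
      rewrite len_pow_S.
      eapply Nat.le_trans; [|apply (nsum_ge_term n (fun i => M i c * len_pow m i)%nat b Hb)].
      specialize (IHm b Hb). nia.
Qed.

Fixpoint len_pow_word m (v : list nat) : nat :=
  match v with [] => 0%nat | b :: v' => (len_pow m b + len_pow_word m v')%nat end.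

Lemma length_subst_pow m v w : word_on n v -> In w (subst_pow th m v) -> length w = len_pow_word m v.
Proof.
  revert w; induction v as [|a v IH]; intros w Hv Hw.
  - rewrite subst_pow_nil in Hw; destruct Hw as [<-|[]]; auto.
  - apply word_on_cons in Hv; destruct Hv as [Ha Hv].
    apply in_subst_pow_cons in Hw; destruct Hw as [w1 [w2 [-> [H1 H2]]]].
    rewrite length_app, (length_subst_pow_letter m a w1 Ha H1), (IH w2 Hv H2); auto.
Qed.

End Abelianisation.

Definition card_set (S : list (list nat)) : nat := length (nodup (list_eq_dec Nat.eq_dec) S).

Lemma card_set_ext A B : (forall w, In w A <-> In w B) -> card_set A = card_set B.
Proof.
  intros H; unfold card_set. apply Nat.le_antisymm; apply NoDup_incl_length; try apply NoDup_nodup;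
  intros w Hw; rewrite nodup_In in *; apply H; auto.
Qed.

Lemma card_set_NoDup A : NoDup A -> card_set A = length A.
Proof. intros H; unfold card_set; rewrite nodup_fixed_point; auto. Qed.

Lemma card_set_In A w : In w A -> (1 <= card_set A)%nat.
Proof.
  intros H; unfold card_set. destruct (nodup (list_eq_dec Nat.eq_dec) A) eqn:E; simpl; [|lia].
  rewrite <- (nodup_In (list_eq_dec Nat.eq_dec)) in H. rewrite E in H; destruct H.
Qed.

Lemma app_inj_length (x1 y1 x2 y2 : list nat) :
  length x1 = length x2 -> x1 ++ y1 = x2 ++ y2 -> x1 = x2 /\ y1 = y2.
Proof.
  revert x2; induction x1; intros [|b x2] Hl He; simpl in *; try lia; auto.
  injection He as -> He. destruct (IHx1 x2 ltac:(lia) He) as [-> ->]; auto.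
Qed.

Lemma cat_set_NoDup X Y L : NoDup X -> NoDup Y -> (forall x, In x X -> length x = L) ->
  NoDup (cat_set X Y) /\ length (cat_set X Y) = (length X * length Y)%nat.
Proof.
  induction X as [|x X IH]; intros HX HY HL; simpl; [split; auto; constructor|].
  inversion HX as [|? ? Hnx HX']; subst.
  destruct (IH HX' HY (fun x' H => HL x' (or_intror H))) as [H1 H2].
  change (cat_set (x :: X) Y) with (map (fun y => x ++ y) Y ++ cat_set X Y).
  rewrite length_app, length_map, H2. split; [|lia].
  apply NoDup_app; auto.
  - apply NoDup_map_NoDup_ForallPairs; auto. intros a b _ _ Hab. apply app_inv_head in Hab; auto.
  - intros w Hw1 Hw2. apply in_map_iff in Hw1; destruct Hw1 as [y [<- Hy]].
    apply in_cat_set in Hw2; destruct Hw2 as [x' [y' [He [Hx' Hy']]]].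
    destruct (app_inj_length x y x' y') as [<- _]; auto.
    rewrite (HL x), (HL x'); simpl; auto.
Qed.

(* Words of a common length are uniquely decomposed by concatenation. *)
Lemma card_cat_set X Y L : (forall x, In x X -> length x = L) ->
  card_set (cat_set X Y) = (card_set X * card_set Y)%nat.
Proof.
  intros HL. set (d := list_eq_dec Nat.eq_dec).
  rewrite (card_set_ext _ (cat_set (nodup d X) (nodup d Y))).
  - destruct (cat_set_NoDup (nodup d X) (nodup d Y) L) as [H1 H2]; try apply NoDup_nodup.
    + intros x Hx; apply HL; apply nodup_In in Hx; auto.
    + rewrite card_set_NoDup by auto. rewrite H2; auto.
  - intros w; rewrite !in_cat_set; split; intros [x [y [-> [Hx Hy]]]]; exists x, y;
      rewrite ?nodup_In in *; auto.
Qed.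

Lemma card_set_flat_map_disjoint (f : list nat -> list (list nat)) L K : NoDup L ->
  (forall u v, In u L -> In v L -> u <> v -> forall w, ~ (In w (f u) /\ In w (f v))) ->
  (forall u, In u L -> card_set (f u) = K) ->
  card_set (flat_map f L) = (length L * K)%nat.
Proof.
  set (d := list_eq_dec Nat.eq_dec). intros HN HD HK.
  rewrite (card_set_ext _ (flat_map (fun u => nodup d (f u)) L)).
  2:{ intros w; rewrite !in_flat_map; split; intros [u [Hu Hw]]; exists u; rewrite ?nodup_In in *; auto. }
  rewrite card_set_NoDup.
  - clear HD HN. induction L as [|u L IH]; simpl; auto.
    rewrite length_app, IH by (intros; apply HK; simpl; auto).
    rewrite <- (HK u) by (simpl; auto); auto.
  - induction L as [|u L IH]; simpl; [constructor|].
    inversion HN; subst. apply NoDup_app; [apply NoDup_nodup| |].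
    + apply IH; auto; intros; [apply HD|apply HK]; simpl; auto.
    + intros w Hw Hw2. apply in_flat_map in Hw2; destruct Hw2 as [v [Hv Hw2]].
      apply nodup_In in Hw, Hw2. apply (HD u v) with w; simpl; auto.
      intros ->; contradiction.
Qed.

Lemma ln_le_mono x y : 0 < x -> x <= y -> ln x <= ln y.
Proof. intros Hx Hxy. destruct (Rle_lt_or_eq_dec _ _ Hxy) as [H|<-]; [left; apply ln_increasing; auto|lra]. Qed.

Lemma ln_nonneg_nat k : (1 <= k)%nat -> 0 <= ln (INR k).
Proof. intros H. rewrite <- ln_1. apply ln_le_mono; [lra|apply (le_INR 1); auto]. Qed.

Lemma length_th_pos n th a : is_random_subst n th -> (a < n)%nat -> (1 <= length (th a))%nat.
Proof. intros Hrs Ha. destruct (th a) eqn:E; simpl; [now destruct (Hrs a Ha)|lia]. Qed.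

Section Counting.
Variable n : nat.
Variable th : rsubst.
Hypothesis Hrs : is_random_subst n th.
Hypothesis Hsc : semi_compatible n th.
Notation M := (subst_matrix th).

Definition card_pow m c := card_set (subst_pow th m [c]).
Definition log_card_pow m c := ln (INR (card_pow m c)).

Lemma card_subst_pow_pos m v : word_on n v -> (1 <= card_set (subst_pow th m v))%nat.
Proof. intros Hv. destruct (subst_pow_nonempty n th Hrs m v Hv) as [w Hw]. eapply card_set_In; eauto. Qed.

Lemma card_pow_pos m c : (c < n)%nat -> (1 <= card_pow m c)%nat.
Proof. intros Hc. apply card_subst_pow_pos, word_on_letter; auto. Qed.

Lemma log_card_pow_nonneg m c : (c < n)%nat -> 0 <= log_card_pow m c.
Proof. intros; apply ln_nonneg_nat, card_pow_pos; auto. Qed.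

Lemma log_card_pow_0 c : log_card_pow 0 c = 0.
Proof. apply ln_1. Qed.

Lemma log_card_pow_1 c : (c < n)%nat -> log_card_pow 1 c = q1 th c.
Proof.
  intros Hc. unfold log_card_pow, card_pow, q1. do 2 f_equal.
  rewrite (card_set_ext _ (th c)).
  - apply card_set_NoDup, (Hrs c Hc).
  - intros w; rewrite in_subst_pow_S_letter; simpl; split;
      [intros [v [Hv [<-|[]]]]; auto|intros H; exists w; auto].
Qed.

Lemma card_subst_pow_cons m a v : (a < n)%nat ->
  card_set (subst_pow th m (a :: v)) = (card_pow m a * card_set (subst_pow th m v))%nat.
Proof.
  intros Ha. unfold card_pow. rewrite <- (card_cat_set _ _ (len_pow n th m a)).
  - apply card_set_ext; intros w; rewrite in_subst_pow_cons, in_cat_set; tauto.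
  - intros x Hx; eapply length_subst_pow_letter; eauto.
Qed.

Lemma log_card_subst_pow m v : word_on n v ->
  ln (INR (card_set (subst_pow th m v))) = rsum n (fun i => INR (occ i v) * log_card_pow m i).
Proof.
  induction v as [|a v IH]; intros Hv.
  - rewrite subst_pow_nil. unfold card_set; simpl. rewrite ln_1.
    symmetry; apply rsum_zero; intros; unfold occ; simpl; lra.
  - apply word_on_cons in Hv; destruct Hv as [Ha Hv].
    rewrite card_subst_pow_cons, mult_INR, ln_mult, IH by
      (auto; apply lt_0_INR; first [apply card_pow_pos|apply card_subst_pow_pos]; auto).
    rewrite (rsum_ext n (fun i => INR (occ i (a :: v)) * log_card_pow m i)
      (fun i => (if Nat.eqb i a then 1 else 0) * log_card_pow m i + INR (occ i v) * log_card_pow m i)).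
    + rewrite rsum_add, rsum_delta; auto.
    + intros i _. rewrite occ_cons, plus_INR. destruct (Nat.eqb i a); simpl; lra.
Qed.

Lemma log_card_subst_pow_th m c u : (c < n)%nat -> In u (th c) ->
  ln (INR (card_set (subst_pow th m u))) = rsum n (fun i => INR (M i c) * log_card_pow m i).
Proof.
  intros Hc Hu. rewrite log_card_subst_pow by (eapply word_on_th; eauto).
  apply rsum_ext; intros i _. rewrite (occ_th n th Hsc c u i Hc Hu); auto.
Qed.

Lemma log_card_pow_identical m c : identical_set_cond n th -> (1 <= m)%nat -> (c < n)%nat ->
  log_card_pow (S m) c = rsum n (fun i => INR (M i c) * log_card_pow m i).
Proof.
  intros HI Hm Hc. destruct (exists_in_th n th Hrs c Hc) as [u0 Hu0].
  rewrite <- (log_card_subst_pow_th m c u0) by auto. unfold log_card_pow, card_pow. do 2 f_equal.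
  apply card_set_ext; intros w. rewrite in_subst_pow_S_letter. split.
  - intros [v [Hv Hw]]. apply (HI c Hc m Hm v u0); auto.
  - intros Hw; exists u0; auto.
Qed.

Lemma log_card_pow_disjoint m c : disjoint_set_cond n th -> (c < n)%nat ->
  log_card_pow (S m) c = q1 th c + rsum n (fun i => INR (M i c) * log_card_pow m i).
Proof.
  intros HD Hc. destruct (exists_in_th n th Hrs c Hc) as [u0 Hu0].
  assert (Hpos : forall u, In u (th c) -> 0 < INR (card_set (subst_pow th m u)))
    by (intros; apply lt_0_INR, card_subst_pow_pos; eapply word_on_th; eauto).
  rewrite <- (log_card_subst_pow_th m c u0 Hc Hu0). unfold log_card_pow, card_pow, q1.
  rewrite (card_set_ext _ (flat_map (subst_pow th m) (th c)))
    by (intros w; rewrite in_subst_pow_S_letter, in_flat_map; tauto).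
  rewrite (card_set_flat_map_disjoint _ _ (card_set (subst_pow th m u0))).
  - rewrite mult_INR, ln_mult; auto. apply lt_0_INR, (length_th_pos n); auto.
  - apply (Hrs c Hc).
  - intros u v Hu Hv Huv w [H1 H2]. destruct m.
    + destruct H1 as [<-|[]], H2 as [->|[]]; auto.
    + apply (HD c Hc (S m) ltac:(lia) u v Hu Hv Huv w); auto.
  - intros u Hu. apply INR_eq, ln_inv; auto.
    rewrite !(log_card_subst_pow_th m c) by auto; auto.
Qed.

End Counting.

Definition eventually (P : nat -> Prop) : Prop := exists N, forall m, (N <= m)%nat -> P m.

Lemma eventually_and P Q : eventually P -> eventually Q -> eventually (fun m => P m /\ Q m).
Proof. intros [N1 H1] [N2 H2]. exists (Nat.max N1 N2); intros m Hm; split; [apply H1|apply H2]; lia. Qed.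

Lemma eventually_forall_lt n (P : nat -> nat -> Prop) :
  (forall c, (c < n)%nat -> eventually (P c)) -> eventually (fun m => forall c, (c < n)%nat -> P c m).
Proof.
  induction n as [|n IH]; intros H.
  - exists 0%nat; intros m _ c Hc; lia.
  - destruct (eventually_and _ _ (IH (fun c Hc => H c (Nat.lt_lt_succ_r _ _ Hc))) (H n (Nat.lt_succ_diag_r n)))
      as [N HN].
    exists N; intros m Hm c Hc. destruct (HN m Hm) as [H1 H2].
    destruct (Nat.eq_dec c n) as [->|]; [auto|apply H1; lia].
Qed.

(* [x m / y m] tends to [r], in a form that does not divide by [y m]. *)
Definition ratio_tends (x y : nat -> R) (r : R) : Prop :=
  forall eps, 0 < eps -> eventually (fun m => (r - eps) * y m <= x m <= (r + eps) * y m).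

Definition unbounded (y : nat -> R) : Prop := forall B, eventually (fun m => B <= y m).

Lemma ratio_tends_shift (x y : nat -> R) r :
  ratio_tends (fun m => x (S m)) (fun m => y (S m)) r -> ratio_tends x y r.
Proof. intros H eps Heps. destruct (H eps Heps) as [N HN]. exists (S N); intros [|m] Hm; [lia|apply HN; lia]. Qed.

Fixpoint rmax (k : nat) (f : nat -> R) : R :=
  match k with O => f O | S k' => Rmax (rmax k' f) (f k') end.
Fixpoint rmin (k : nat) (f : nat -> R) : R :=
  match k with O => f O | S k' => Rmin (rmin k' f) (f k') end.

Lemma rmax_ge k f c : (c < k)%nat -> f c <= rmax k f.
Proof.
  induction k; simpl; intros Hc; [lia|]. destruct (Nat.eq_dec c k); subst.
  - apply Rmax_r.
  - eapply Rle_trans; [apply IHk; lia|apply Rmax_l].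
Qed.

Lemma rmin_le k f c : (c < k)%nat -> rmin k f <= f c.
Proof.
  induction k; simpl; intros Hc; [lia|]. destruct (Nat.eq_dec c k); subst.
  - apply Rmin_r.
  - eapply Rle_trans; [apply Rmin_l|apply IHk; lia].
Qed.

Lemma rmax_attained k f : (0 < k)%nat -> exists c, (c < k)%nat /\ rmax k f = f c.
Proof.
  induction k; simpl; intros Hk; [lia|]. destruct k.
  - exists 0%nat; split; [lia|]. unfold Rmax; destruct Rle_dec; auto.
  - destruct (IHk ltac:(lia)) as [c [Hc Hf]]. unfold Rmax; destruct Rle_dec.
    + exists (S k); split; auto.
    + exists c; split; auto.
Qed.

Lemma rmin_attained k f : (0 < k)%nat -> exists c, (c < k)%nat /\ rmin k f = f c.
Proof.
  induction k; simpl; intros Hk; [lia|]. destruct k.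
  - exists 0%nat; split; [lia|]. unfold Rmin; destruct Rle_dec; auto.
  - destruct (IHk ltac:(lia)) as [c [Hc Hf]]. unfold Rmin; destruct Rle_dec.
    + exists c; split; auto.
    + exists (S k); split; auto.
Qed.

Lemma convex_comb_bounds n w v a b : (forall i, (i < n)%nat -> 0 <= w i) -> rsum n w = 1 ->
  (forall i, (i < n)%nat -> a <= v i <= b) -> a <= rsum n (fun i => w i * v i) <= b.
Proof.
  intros Hw Hs Hv. split.
  - replace a with (rsum n (fun i => w i * a)) by (rewrite rsum_scal_r, Hs; lra).
    apply rsum_le; intros i Hi; specialize (Hv i Hi); specialize (Hw i Hi); nra.
  - replace b with (rsum n (fun i => w i * b)) by (rewrite rsum_scal_r, Hs; lra).
    apply rsum_le; intros i Hi; specialize (Hv i Hi); specialize (Hw i Hi); nra.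
Qed.

Lemma convex_comb_contract n w v a b d i0 i1 :
  (forall i, (i < n)%nat -> d <= w i) -> 0 <= d -> rsum n w = 1 ->
  (forall i, (i < n)%nat -> a <= v i <= b) -> (i0 < n)%nat -> v i0 = a -> (i1 < n)%nat -> v i1 = b ->
  a + d * (b - a) <= rsum n (fun i => w i * v i) <= b - d * (b - a).
Proof.
  intros Hw Hd Hs Hv H0 E0 H1 E1. split.
  - assert (rsum n (fun i => w i * v i) = a + rsum n (fun i => w i * (v i - a))) as ->.
    { rewrite (rsum_ext n (fun i => w i * (v i - a)) (fun i => w i * v i + (- a) * w i)) by (intros; ring).
      rewrite rsum_add, rsum_scal, Hs; ring. }
    assert (w i1 * (v i1 - a) <= rsum n (fun i => w i * (v i - a))).
    { apply (rsum_ge_term n (fun i => w i * (v i - a))); auto.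
      intros j Hj; specialize (Hv j Hj); specialize (Hw j Hj); nra. }
    rewrite E1 in H. specialize (Hw i1 H1). specialize (Hv i1 H1). nra.
  - assert (rsum n (fun i => w i * v i) = b - rsum n (fun i => w i * (b - v i))) as ->.
    { rewrite (rsum_ext n (fun i => w i * (b - v i)) (fun i => b * w i + (-1) * (w i * v i))) by (intros; ring).
      rewrite rsum_add, !rsum_scal, Hs; ring. }
    assert (w i0 * (b - v i0) <= rsum n (fun i => w i * (b - v i))).
    { apply (rsum_ge_term n (fun i => w i * (b - v i))); auto.
      intros j Hj; specialize (Hv j Hj); specialize (Hw j Hj); nra. }
    rewrite E0 in H. specialize (Hw i0 H0). specialize (Hv i0 H0). nra.
Qed.

Lemma rsum_mat_pow_0 n M (v : nat -> R) c : (c < n)%nat ->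
  rsum n (fun i => INR (mat_pow n M 0 i c) * v i) = v c.
Proof.
  intros Hc. rewrite <- (rsum_delta n c v Hc). apply rsum_ext; intros i _.
  simpl. destruct (Nat.eqb i c); simpl; ring.
Qed.

Section RatioConvergence.
Variable n : nat.
Variable M : nat -> nat -> nat.
Variable lam : R.
Variable Rv : nat -> R.
Hypothesis Hn : (0 < n)%nat.
Hypothesis HPF : PF_pair n M lam Rv.

Definition is_orbit (x : nat -> nat -> R) : Prop :=
  forall m c, (c < n)%nat -> x (S m) c = rsum n (fun i => INR (M i c) * x m i).

Definition pf_pairing (x : nat -> nat -> R) m := rsum n (fun c => Rv c * x m c).

Lemma pf_pairing_S x m : is_orbit x -> pf_pairing x (S m) = lam * pf_pairing x m.
Proof.
  intros Hx. unfold pf_pairing. rewrite (rsum_ext n (fun c => Rv c * x (S m) c)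
    (fun c => rsum n (fun i => x m i * (INR (M i c) * Rv c)))).
  - rewrite rsum_swap, <- rsum_scal. apply rsum_ext; intros i Hi.
    rewrite rsum_scal, (proj2 (proj2 HPF) i Hi). ring.
  - intros c Hc; rewrite Hx, <- rsum_scal by auto. apply rsum_ext; intros; ring.
Qed.

Lemma pf_pairing_pow x m : is_orbit x -> pf_pairing x m = lam ^ m * pf_pairing x 0.
Proof. intros Hx; induction m; simpl; [ring|]. rewrite pf_pairing_S, IHm; auto; ring. Qed.

Lemma orbit_add x m k c : is_orbit x -> (c < n)%nat ->
  x (m + k)%nat c = rsum n (fun i => INR (mat_pow n M k i c) * x m i).
Proof.
  intros Hx; revert c; induction k; intros c Hc.
  - rewrite Nat.add_0_r, rsum_mat_pow_0; auto.
  - replace (m + S k)%nat with (S (m + k)) by lia. rewrite Hx by auto.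
    rewrite (rsum_ext n (fun i => INR (M i c) * x (m + k)%nat i)
      (fun l => rsum n (fun i => INR (mat_pow n M k i l) * INR (M l c) * x m i))).
    + rewrite rsum_swap. apply rsum_ext; intros i _. simpl. rewrite INR_nsum, <- rsum_scal_r.
      apply rsum_ext; intros; rewrite mult_INR; ring.
    + intros l Hl. rewrite IHk, <- rsum_scal by auto. apply rsum_ext; intros; ring.
Qed.

Lemma orbit_of_vector (v : nat -> R) :
  is_orbit (fun m c => rsum n (fun i => INR (mat_pow n M m i c) * v i)).
Proof.
  intros m c Hc. simpl.
  rewrite (rsum_ext n (fun i => INR (M i c) * rsum n (fun j => INR (mat_pow n M m j i) * v j))
    (fun l => rsum n (fun i => INR (mat_pow n M m i l) * INR (M l c) * v i))).
  - rewrite rsum_swap. apply rsum_ext; intros i _. rewrite INR_nsum, <- rsum_scal_r.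
    apply rsum_ext; intros; rewrite mult_INR; ring.
  - intros l Hl. rewrite <- rsum_scal. apply rsum_ext; intros; ring.
Qed.

Variable x y : nat -> nat -> R.
Hypothesis Hx : is_orbit x.
Hypothesis Hy : is_orbit y.
Hypothesis Hypos : forall m c, (c < n)%nat -> 0 < y m c.

Definition ratio m c := x m c / y m c.
Definition ratio_max m := rmax n (ratio m).
Definition ratio_min m := rmin n (ratio m).
Definition ratio_limit := pf_pairing x 0 / pf_pairing y 0.

Definition ratio_weight m k c i := INR (mat_pow n M k i c) * y m i / y (m + k)%nat c.

Lemma ratio_add m k c : (c < n)%nat ->
  ratio (m + k)%nat c = rsum n (fun i => ratio_weight m k c i * ratio m i).
Proof.
  intros Hc. unfold ratio, ratio_weight. rewrite (orbit_add x m k c Hx Hc).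
  assert (0 < y (m + k)%nat c) by auto.
  rewrite (rsum_ext n (fun i => (INR (mat_pow n M k i c) * y m i / y (m + k)%nat c) * (x m i / y m i))
     (fun i => / y (m+k)%nat c * (INR (mat_pow n M k i c) * x m i))).
  - rewrite rsum_scal. unfold Rdiv; ring.
  - intros i Hi. assert (0 < y m i) by auto. field; split; lra.
Qed.

Lemma ratio_weight_sum m k c : (c < n)%nat -> rsum n (ratio_weight m k c) = 1.
Proof.
  intros Hc. assert (0 < y (m + k)%nat c) by auto. unfold ratio_weight.
  rewrite (rsum_ext n _ (fun i => / y (m+k)%nat c * (INR (mat_pow n M k i c) * y m i)))
    by (intros; unfold Rdiv; ring).
  rewrite rsum_scal, <- (orbit_add y m k c Hy Hc). field; lra.
Qed.

Lemma ratio_weight_nonneg m k c i : (c < n)%nat -> (i < n)%nat -> 0 <= ratio_weight m k c i.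
Proof.
  intros Hc Hi. assert (0 < y (m + k)%nat c) by auto. assert (0 < y m i) by auto.
  apply Rmult_le_pos; [apply Rmult_le_pos; [apply pos_INR|lra]|left; apply Rinv_0_lt_compat; lra].
Qed.

Lemma ratio_bounds m k c : (c < n)%nat -> ratio_min m <= ratio (m + k)%nat c <= ratio_max m.
Proof.
  intros Hc. rewrite ratio_add by auto. apply convex_comb_bounds.
  - intros; apply ratio_weight_nonneg; auto.
  - apply ratio_weight_sum; auto.
  - intros i Hi; split; [apply rmin_le|apply rmax_ge]; auto.
Qed.

Lemma ratio_max_decr m k : ratio_max (m + k)%nat <= ratio_max m.
Proof.
  destruct (rmax_attained n (ratio (m + k)%nat) Hn) as [c [Hc E]].
  unfold ratio_max at 1; rewrite E. apply ratio_bounds; auto.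
Qed.

Lemma ratio_min_incr m k : ratio_min m <= ratio_min (m + k)%nat.
Proof.
  destruct (rmin_attained n (ratio (m + k)%nat) Hn) as [c [Hc E]].
  unfold ratio_min at 2; rewrite E. apply ratio_bounds; auto.
Qed.

Lemma ratio_min_le_max m : ratio_min m <= ratio_max m.
Proof. apply Rle_trans with (ratio m 0%nat); [apply rmin_le|apply rmax_ge]; auto. Qed.

Lemma pf_pairing_y_pos m : 0 < pf_pairing y m.
Proof.
  unfold pf_pairing; apply rsum_pos; auto. intros c Hc.
  apply Rmult_lt_0_compat; auto. apply (proj1 HPF); auto.
Qed.

(* Both pairings grow like [lam ^ m], and the pairing ratio at time [m] is a convex
   combination of the values of [ratio m]. *)
Lemma ratio_limit_bounds m : ratio_min m <= ratio_limit <= ratio_max m.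
Proof.
  pose proof (pf_pairing_y_pos m) as H.
  assert (ratio_limit = pf_pairing x m / pf_pairing y m) as ->.
  { unfold ratio_limit. rewrite (pf_pairing_pow y m Hy) in H.
    rewrite (pf_pairing_pow x m Hx), (pf_pairing_pow y m Hy).
    assert (lam ^ m <> 0) by (intros E; rewrite E in H; lra).
    assert (pf_pairing y 0 <> 0) by (intros E; rewrite E in H; lra).
    field; split; auto. }
  assert (pf_pairing x m / pf_pairing y m =
          rsum n (fun c => (Rv c * y m c / pf_pairing y m) * ratio m c)) as ->.
  { unfold pf_pairing at 1.
    rewrite (rsum_ext n (fun c => (Rv c * y m c / pf_pairing y m) * ratio m c)
      (fun c => / pf_pairing y m * (Rv c * x m c))).
    - rewrite rsum_scal; unfold Rdiv; ring.
    - intros c Hc; unfold ratio. assert (0 < y m c) by auto. field; split; lra. }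
  apply convex_comb_bounds.
  - intros i Hi. apply Rmult_le_pos; [apply Rmult_le_pos|left; apply Rinv_0_lt_compat; lra].
    + left; apply (proj1 HPF); auto.
    + left; auto.
  - rewrite (rsum_ext n _ (fun c => / pf_pairing y m * (Rv c * y m c))) by (intros; unfold Rdiv; ring).
    rewrite rsum_scal. fold (pf_pairing y m). field; lra.
  - intros i Hi; split; [apply rmin_le|apply rmax_ge]; auto.
Qed.

Section Primitive.
Variable p : nat.
Hypothesis Hp : forall i j, (i < n)%nat -> (j < n)%nat -> (0 < mat_pow n M p i j)%nat.

Definition col_sum_total := rsum n (fun c => rsum n (fun i => INR (mat_pow n M p i c))).

Lemma mat_pow_p_ge1 i c : (i < n)%nat -> (c < n)%nat -> 1 <= INR (mat_pow n M p i c).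
Proof. intros; apply (le_INR 1); apply Hp; auto. Qed.

Lemma col_sum_total_ge1 : 1 <= col_sum_total.
Proof.
  unfold col_sum_total. apply Rle_trans with (rsum n (fun i => INR (mat_pow n M p i 0%nat))).
  - apply Rle_trans with (INR (mat_pow n M p 0%nat 0%nat)); [apply mat_pow_p_ge1; auto|].
    apply (rsum_ge_term n (fun i => INR (mat_pow n M p i 0%nat))); auto. intros; apply pos_INR.
  - apply (rsum_ge_term n (fun c => rsum n (fun i => INR (mat_pow n M p i c)))); auto.
    intros; apply rsum_nonneg; intros; apply pos_INR.
Qed.

Lemma orbit_upper m c : (c < n)%nat -> y (m + p)%nat c <= col_sum_total * rmax n (y m).
Proof.
  intros Hc. rewrite (orbit_add y m p c Hy Hc).
  apply Rle_trans with (rsum n (fun i => INR (mat_pow n M p i c)) * rmax n (y m)).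
  - rewrite <- rsum_scal_r. apply rsum_le; intros i Hi.
    apply Rmult_le_compat_l; [apply pos_INR|apply rmax_ge; auto].
  - apply Rmult_le_compat_r.
    + apply Rle_trans with (y m 0%nat); [left; auto|apply rmax_ge; auto].
    + unfold col_sum_total. apply (rsum_ge_term n (fun c => rsum n (fun i => INR (mat_pow n M p i c)))); auto.
      intros; apply rsum_nonneg; intros; apply pos_INR.
Qed.

Lemma orbit_lower m i j : (i < n)%nat -> (j < n)%nat -> y m j <= y (m + p)%nat i.
Proof.
  intros Hi Hj. rewrite (orbit_add y m p i Hy Hi).
  apply Rle_trans with (INR (mat_pow n M p j i) * y m j).
  - assert (0 < y m j) by auto. pose proof (mat_pow_p_ge1 j i Hj Hi). nra.
  - apply (rsum_ge_term n (fun l => INR (mat_pow n M p l i) * y m l)); auto.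
    intros l Hl; apply Rmult_le_pos; [apply pos_INR|left; auto].
Qed.

Definition min_weight := / (2 * col_sum_total * col_sum_total).

Lemma min_weight_pos : 0 < min_weight.
Proof. unfold min_weight. pose proof col_sum_total_ge1. apply Rinv_0_lt_compat. nra. Qed.

Lemma min_weight_le_half : min_weight <= /2.
Proof. unfold min_weight. pose proof col_sum_total_ge1. apply Rinv_le_contravar; nra. Qed.

(* After a warm-up of [p] steps, all entries of [y] are comparable within a factor
   [col_sum_total ^ 2], so every weight of a [p]-step is at least [min_weight]. *)
Lemma ratio_weight_lb m c i : (c < n)%nat -> (i < n)%nat ->
  min_weight <= ratio_weight (m + p) p c i.
Proof.
  intros Hc Hi. unfold ratio_weight. set (K := col_sum_total).
  destruct (rmax_attained n (y m) Hn) as [j0 [Hj0 E0]].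
  set (Y0 := rmax n (y m)).
  assert (HY0 : 0 < Y0) by (unfold Y0; rewrite E0; auto).
  assert (H1 : Y0 <= y (m + p)%nat i) by (unfold Y0; rewrite E0; apply orbit_lower; auto).
  assert (H2 : rmax n (y (m + p)%nat) <= K * Y0).
  { destruct (rmax_attained n (y (m + p)%nat) Hn) as [j1 [Hj1 E1]]. rewrite E1. apply orbit_upper; auto. }
  assert (HK : 1 <= K) by apply col_sum_total_ge1.
  assert (H3 : y (m + p + p)%nat c <= K * (K * Y0)).
  { eapply Rle_trans; [apply orbit_upper; auto|]. apply Rmult_le_compat_l; lra. }
  pose proof (mat_pow_p_ge1 i c Hi Hc).
  assert (0 < y (m + p + p)%nat c) by auto.
  unfold min_weight; fold K. apply Rle_trans with (y (m + p)%nat i / y (m + p + p)%nat c).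
  - apply Rle_trans with (Y0 / (K * (K * Y0))).
    + replace (Y0 / (K * (K * Y0))) with (/ (K * K)) by (field; lra). apply Rinv_le_contravar; nra.
    + unfold Rdiv. apply Rmult_le_compat; try lra.
      * left; apply Rinv_0_lt_compat. nra.
      * apply Rinv_le_contravar; lra.
  - unfold Rdiv. rewrite Rmult_assoc.
    assert (0 <= y (m + p)%nat i * / y (m + p + p)%nat c).
    { apply Rmult_le_pos; [lra|left; apply Rinv_0_lt_compat; lra]. }
    nra.
Qed.

Lemma ratio_osc_contract m :
  ratio_max (m + p + p)%nat - ratio_min (m + p + p)%nat <=
  (1 - 2 * min_weight) * (ratio_max (m + p)%nat - ratio_min (m + p)%nat).
Proof.
  set (a := ratio_min (m + p)%nat). set (b := ratio_max (m + p)%nat).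
  destruct (rmin_attained n (ratio (m + p)%nat) Hn) as [i0 [Hi0 E0]].
  destruct (rmax_attained n (ratio (m + p)%nat) Hn) as [i1 [Hi1 E1]].
  assert (HB : forall c, (c < n)%nat ->
    a + min_weight * (b - a) <= ratio (m + p + p)%nat c <= b - min_weight * (b - a)).
  { intros c Hc. rewrite ratio_add by auto. apply convex_comb_contract with i0 i1; auto.
    - intros; apply ratio_weight_lb; auto.
    - left; apply min_weight_pos.
    - apply ratio_weight_sum; auto.
    - intros i Hi; split; [apply rmin_le|apply rmax_ge]; auto. }
  destruct (rmin_attained n (ratio (m + p + p)%nat) Hn) as [c0 [Hc0 F0]].
  destruct (rmax_attained n (ratio (m + p + p)%nat) Hn) as [c1 [Hc1 F1]].
  unfold ratio_max at 1, ratio_min at 1. rewrite F0, F1.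
  pose proof (HB c0 Hc0). pose proof (HB c1 Hc1). lra.
Qed.

Lemma ratio_osc_iter j :
  ratio_max (p + j * p)%nat - ratio_min (p + j * p)%nat <=
  (1 - 2 * min_weight) ^ j * (ratio_max p - ratio_min p).
Proof.
  pose proof min_weight_pos; pose proof min_weight_le_half.
  induction j; simpl.
  - rewrite Nat.add_0_r; lra.
  - pose proof (ratio_osc_contract (j * p)%nat) as Hc.
    replace (j * p + p + p)%nat with (p + (p + j * p))%nat in Hc by lia.
    replace (j * p + p)%nat with (p + j * p)%nat in Hc by lia.
    eapply Rle_trans; [apply Hc|]. rewrite Rmult_assoc. apply Rmult_le_compat_l; lra.
Qed.

Lemma ratio_osc_small eps : 0 < eps ->
  eventually (fun m => ratio_max m - ratio_min m <= eps).
Proof.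
  intros Heps. pose proof min_weight_pos; pose proof min_weight_le_half.
  set (D := ratio_max p - ratio_min p).
  assert (HD : 0 <= D) by (unfold D; pose proof (ratio_min_le_max p); lra).
  destruct (pow_lt_1_zero (1 - 2 * min_weight) ltac:(apply Rabs_def1; lra) (eps / (D + 1)))
    as [j Hj]; [apply Rdiv_lt_0_compat; lra|].
  exists (p + j * p)%nat. intros m Hm.
  replace m with ((p + j * p) + (m - (p + j * p)))%nat by lia.
  pose proof (ratio_max_decr (p + j * p)%nat (m - (p + j * p))).
  pose proof (ratio_min_incr (p + j * p)%nat (m - (p + j * p))).
  pose proof (ratio_osc_iter j). specialize (Hj j (le_n j)).
  assert (0 <= (1 - 2 * min_weight) ^ j) by (apply pow_le; lra).
  rewrite Rabs_right in Hj by lra.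
  assert ((1 - 2 * min_weight) ^ j * D <= eps / (D + 1) * D) by (apply Rmult_le_compat_r; lra).
  assert (eps / (D + 1) * D <= eps).
  { apply Rmult_le_reg_r with (D + 1); [lra|].
    replace (eps / (D + 1) * D * (D + 1)) with (eps * D) by (field; lra). nra. }
  unfold D in *; lra.
Qed.

End Primitive.

Hypothesis Hprim : primitive_mx n M.

Theorem orbit_ratio_tends c : (c < n)%nat ->
  ratio_tends (fun m => x m c) (fun m => y m c) ratio_limit.
Proof.
  intros Hc eps Heps. destruct Hprim as [p [_ Hp]].
  destruct (ratio_osc_small p Hp eps Heps) as [N HN]. exists N; intros m Hm.
  pose proof (HN m Hm). pose proof (ratio_limit_bounds m).
  pose proof (ratio_bounds m 0 c Hc) as Hb. rewrite Nat.add_0_r in Hb.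
  assert (Hym : 0 < y m c) by auto.
  assert (Hr : x m c = ratio m c * y m c) by (unfold ratio; field; lra).
  rewrite Hr. split; apply Rmult_le_compat_r; lra.
Qed.

End RatioConvergence.

Lemma bernoulli_ineq mu k : 1 <= mu -> 1 + INR k * (mu - 1) <= mu ^ k.
Proof.
  intros H; induction k; [simpl; lra|]. rewrite S_INR. cbn [pow].
  assert (0 <= mu ^ k) by (apply pow_le; lra). pose proof (pos_INR k).
  assert (0 <= INR k * (mu - 1) * (mu - 1)) by (apply Rmult_le_pos; [apply Rmult_le_pos|]; lra). nra.
Qed.

Lemma unbounded_le_mult (L : nat -> R) eps : 0 < eps -> unbounded L ->
  forall C, eventually (fun m => C <= eps * L m).
Proof.
  intros Heps HL C. destruct (HL (C / eps)) as [N HN]. exists N; intros m Hm.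
  specialize (HN m Hm). apply Rmult_le_compat_l with (r := eps) in HN; [|lra].
  replace (eps * (C / eps)) with C in HN by (field; lra). lra.
Qed.

Lemma ratio_tends_succ_unbounded (L : nat -> R) lam :
  (forall m, 0 < L m) -> 1 < lam -> ratio_tends (fun m => L (S m)) L lam -> unbounded L.
Proof.
  intros Hpos Hlam HL B.
  destruct (HL ((lam - 1) / 2) ltac:(lra)) as [J HJ]. set (mu := lam - (lam - 1) / 2).
  assert (Hgrowth : forall k, mu ^ k * L J <= L (J + k)%nat).
  { induction k.
    - rewrite Nat.add_0_r; simpl; lra.
    - replace (J + S k)%nat with (S (J + k)) by lia. simpl.
      destruct (HJ (J + k)%nat ltac:(lia)) as [H1 _]; fold mu in H1.
      assert (0 <= mu) by (unfold mu; lra). nra. }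
  assert (Hmu : 0 < mu - 1) by (unfold mu; lra). pose proof (Hpos J).
  destruct (INR_unbounded (Rabs B / ((mu - 1) * L J))) as [K HK].
  exists (J + K)%nat. intros m Hm.
  replace m with (J + (m - J))%nat by lia. eapply Rle_trans; [|apply Hgrowth].
  pose proof (bernoulli_ineq mu (m - J) ltac:(lra)).
  assert (INR K <= INR (m - J)) by (apply le_INR; lia).
  assert (Rabs B / ((mu - 1) * L J) * ((mu - 1) * L J) = Rabs B) by (field; lra).
  assert (Rabs B / ((mu - 1) * L J) * ((mu - 1) * L J) <= INR (m - J) * ((mu - 1) * L J))
    by (apply Rmult_le_compat_r; [apply Rmult_le_pos|]; lra).
  pose proof (RRle_abs B). nra.
Qed.

Lemma telescope_upper (E H L : nat -> R) a lam B J :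
  (forall m, E (S m) = E m + H m) ->
  (forall j, (J <= j)%nat -> H j <= a * L j) ->
  (forall j, (J <= j)%nat -> lam * L j <= L (S j)) ->
  (forall j, 0 < L j) -> 0 <= B -> a <= B * (lam - 1) ->
  forall m, (J <= m)%nat -> E m - E J <= B * L m.
Proof.
  intros HE HH HL Hpos HB Hab m Hm. induction Hm.
  - pose proof (Hpos J); nra.
  - rewrite HE. specialize (HH m Hm). specialize (HL m Hm). pose proof (Hpos m). nra.
Qed.

Lemma telescope_lower (E H L : nat -> R) a lam B J :
  (forall m, E (S m) = E m + H m) ->
  (forall j, (J <= j)%nat -> a * L j <= H j) ->
  (forall j, (J <= j)%nat -> L (S j) <= lam * L j) ->
  (forall j, 0 < L j) -> 0 <= B -> B * (lam - 1) <= a ->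
  forall m, (J <= m)%nat -> B * (L m - L J) <= E m - E J.
Proof.
  intros HE HH HL Hpos HB Hab m Hm. induction Hm.
  - nra.
  - rewrite HE. specialize (HH m Hm). specialize (HL m Hm). pose proof (Hpos m). nra.
Qed.

(* A Stolz-Cesaro argument: the sum [E] of increments growing like [a L] along a sequence [L]
   of ratio [lam > 1] grows like [a L (1 + 1/lam + 1/lam^2 + ...) / lam = a L / (lam - 1)]. *)
Lemma ratio_tends_telescope (E H L : nat -> R) a lam :
  (forall m, E (S m) = E m + H m) -> (forall m, 0 <= E m) ->
  (forall m, 0 < L m) -> 0 <= a -> 1 < lam ->
  ratio_tends H L a -> ratio_tends (fun m => L (S m)) L lam ->
  ratio_tends E L (a / (lam - 1)).
Proof.
  intros HE HE0 Hpos Ha Hlam HH HL eps Heps.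
  set (d := lam - 1). set (rho := a / d).
  assert (Hrho : 0 <= rho) by (unfold rho, d; apply Rmult_le_pos; [|left; apply Rinv_0_lt_compat]; lra).
  assert (Hard : a = rho * d) by (unfold rho, d; field; lra).
  set (eta := Rmin (d / 2) (eps * d / (4 * (1 + rho)))).
  assert (He1 : eta <= d / 2) by apply Rmin_l.
  assert (He0 : 0 < eta).
  { unfold eta. apply Rmin_glb_lt; [unfold d; lra|]. apply Rdiv_lt_0_compat; unfold d; nra. }
  assert (He3 : eta * (1 + rho) <= eps * d / 4).
  { replace (eps * d / 4) with (eps * d / (4 * (1 + rho)) * (1 + rho)) by (field; lra).
    apply Rmult_le_compat_r; [lra|apply Rmin_r]. }
  destruct (eventually_and _ _ (HH eta He0) (HL eta He0)) as [J HJ].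
  destruct (unbounded_le_mult L (eps / 2) ltac:(lra) (ratio_tends_succ_unbounded L lam Hpos Hlam HL)
    (E J + rho * L J)) as [J' HJ'].
  exists (Nat.max J J'). intros m Hm.
  pose proof (HJ' m ltac:(lia)). pose proof (HE0 J). pose proof (Hpos J). pose proof (Hpos m).
  split.
  - destruct (Rle_lt_dec 0 (rho - eps / 2)) as [Hpos'|Hneg]; [|pose proof (HE0 m); nra].
    assert (Hlo : (rho - eps / 2) * (L m - L J) <= E m - E J).
    { apply (telescope_lower E H L (a - eta) (lam + eta) (rho - eps / 2) J); auto; try lia.
      - intros j Hj; apply HJ; auto.
      - intros j Hj; apply HJ; auto.
      - replace (lam + eta - 1) with (d + eta) by (unfold d; ring). nra. }
    nra.
  - assert (Hup : E m - E J <= (rho + eps / 2) * L m).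
    { apply (telescope_upper E H L (a + eta) (lam - eta) (rho + eps / 2) J); auto; try lra; try lia.
      - intros j Hj; apply HJ; auto.
      - intros j Hj; apply HJ; auto.
      - replace (lam - eta - 1) with (d - eta) by (unfold d; ring). nra. }
    nra.
Qed.

Fixpoint words_of_length (n t : nat) : list (list nat) :=
  match t with
  | O => [ [] ]
  | S t' => flat_map (fun b => map (cons b) (words_of_length n t')) (seq 0 n)
  end.

Lemma in_words_of_length n t w : In w (words_of_length n t) <-> length w = t /\ word_on n w.
Proof.
  revert w; induction t; intros w; simpl.
  - split; [intros [<-|[]]; split; auto; apply word_on_nil|].
    intros [H _]; destruct w; simpl in *; auto; lia.
  - rewrite in_flat_map; split.
    + intros [b [Hb Hw]]. apply in_map_iff in Hw; destruct Hw as [w' [<- Hw']].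
      apply IHt in Hw'. apply in_seq in Hb. simpl; split; [lia|]. apply word_on_cons; split; [lia|tauto].
    + intros [Hl Hw]. destruct w as [|b w']; simpl in Hl; [lia|].
      apply word_on_cons in Hw. exists b; split; [apply in_seq; lia|].
      apply in_map_iff; exists w'; split; auto. apply IHt; split; [lia|tauto].
Qed.

Lemma length_flat_map_le {A B} (f : A -> list B) L C :
  (forall x, In x L -> (length (f x) <= C)%nat) -> (length (flat_map f L) <= length L * C)%nat.
Proof.
  induction L; simpl; intros H; auto. rewrite length_app.
  assert (length (f a) <= C)%nat by auto. specialize (IHL ltac:(auto)). lia.
Qed.

Lemma length_flat_map_le_R {A B} (f : A -> list B) L C :
  (forall x, In x L -> INR (length (f x)) <= C) -> INR (length (flat_map f L)) <= INR (length L) * C.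
Proof.
  induction L; cbn [flat_map length]; intros H; [simpl; lra|]. rewrite length_app, plus_INR, S_INR.
  assert (INR (length (f a)) <= C) by (apply H; left; auto).
  assert (INR (length (flat_map f L)) <= INR (length L) * C) by (apply IHL; intros; apply H; right; auto).
  lra.
Qed.

Lemma length_words_of_length n t : length (words_of_length n t) = (n ^ t)%nat.
Proof.
  induction t; simpl; auto.
  assert (Hk : forall s k, length (flat_map (fun b => map (cons b) (words_of_length n t)) (seq s k))
                       = (k * n ^ t)%nat).
  { intros s k; revert s; induction k; intros s; simpl; auto.
    rewrite length_app, length_map, IHt, IHk; lia. }
  rewrite Hk; lia.
Qed.

Lemma subword_trans u v w : subword u v -> subword v w -> subword u w.
Proof. intros [p1 [s1 <-]] [p2 [s2 <-]]. exists (p2 ++ p1), (s1 ++ s2). rewrite <- !app_assoc; auto. Qed.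

Lemma subword_refl u : subword u u.
Proof. exists [], []; rewrite app_nil_r; auto. Qed.

Lemma subword_firstn l u : subword (firstn l u) u.
Proof. exists [], (skipn l u); simpl; apply firstn_skipn. Qed.

Lemma subword_skipn l u : subword (skipn l u) u.
Proof. exists (firstn l u), []; rewrite app_nil_r; apply firstn_skipn. Qed.

Section Language.
Variable n : nat.
Variable th : rsubst.
Hypothesis Hrs : is_random_subst n th.
Hypothesis Hsc : semi_compatible n th.

Lemma word_on_language w : in_language n th w -> word_on n w.
Proof.
  intros [a [m [v [Ha [Hv Hs]]]]]. eapply word_on_subword; [|eauto].
  eapply word_on_subst_pow; eauto. apply word_on_letter; auto.
Qed.

Lemma in_language_subword u w : in_language n th w -> subword u w -> in_language n th u.
Proof. intros [a [m [v [Ha [Hv Hs]]]]] H. exists a, m, v; repeat split; auto. eapply subword_trans; eauto. Qed.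

Lemma in_language_subst_pow a m v : (a < n)%nat -> In v (subst_pow th m [a]) -> in_language n th v.
Proof. intros; exists a, m, v; repeat split; auto; apply subword_refl. Qed.

Definition lang_list l : list (list nat) :=
  nodup (list_eq_dec Nat.eq_dec)
    (filter (fun w => if excluded_middle_informative (in_language n th w) then true else false)
            (words_of_length n l)).

Definition lang_card l := length (lang_list l).

Lemma in_lang_list l w : In w (lang_list l) <-> (in_language n th w /\ length w = l).
Proof.
  unfold lang_list; rewrite nodup_In, filter_In, in_words_of_length.
  destruct excluded_middle_informative as [H|H].
  - split; [intros [[? ?] _]; auto|intros [H1 H2]; repeat split; auto; apply word_on_language; auto].
  - split; [intros [_ Hf]; discriminate|intros [H1 _]; contradiction].
Qed.

Lemma lang_list_NoDup l : NoDup (lang_list l).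
Proof. apply NoDup_nodup. Qed.

Lemma card_lang_lang_card l : card_lang n th l (lang_card l).
Proof. exists (lang_list l); split; [apply lang_list_NoDup|split; [reflexivity|intros w; apply in_lang_list]]. Qed.

Lemma card_lang_unique l c : card_lang n th l c -> c = lang_card l.
Proof.
  intros [L [HN [<- HL]]]. unfold lang_card. apply Nat.le_antisymm; apply NoDup_incl_length;
    auto using lang_list_NoDup; intros w Hw; [apply in_lang_list, HL|apply HL, in_lang_list]; auto.
Qed.

Lemma lang_card_le_pow l : (lang_card l <= n ^ l)%nat.
Proof.
  rewrite <- length_words_of_length. unfold lang_card. apply NoDup_incl_length; auto using lang_list_NoDup.
  intros w Hw; apply in_lang_list in Hw; apply in_words_of_length; split; try tauto.
  apply word_on_language; tauto.
Qed.

(* A legal word of length [l + k] is determined by its two legal halves. *)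
Lemma lang_card_submult l k : (lang_card (l + k) <= lang_card l * lang_card k)%nat.
Proof.
  unfold lang_card. rewrite <- length_prod.
  rewrite <- (length_map (fun w => (firstn l w, skipn l w)) (lang_list (l + k))).
  apply NoDup_incl_length.
  - apply NoDup_map_NoDup_ForallPairs; auto using lang_list_NoDup.
    intros a b _ _ H. injection H as H1 H2.
    rewrite <- (firstn_skipn l a), <- (firstn_skipn l b), H1, H2; auto.
  - intros [u v] H. apply in_map_iff in H; destruct H as [w [E Hw]]; injection E as <- <-.
    apply in_lang_list in Hw; destruct Hw as [Hw Hl].
    apply in_prod; apply in_lang_list; split.
    + eapply in_language_subword; eauto; apply subword_firstn.
    + rewrite length_firstn; lia.
    + eapply in_language_subword; eauto; apply subword_skipn.
    + rewrite length_skipn; lia.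
Qed.

Lemma card_pow_le_lang_card m c : (c < n)%nat -> (card_pow th m c <= lang_card (len_pow n th m c))%nat.
Proof.
  intros Hc. unfold card_pow, card_set, lang_card. apply NoDup_incl_length; [apply NoDup_nodup|].
  intros w Hw; apply nodup_In in Hw. apply in_lang_list; split.
  - eapply in_language_subst_pow; eauto.
  - eapply length_subst_pow_letter; eauto.
Qed.

End Language.

Section Cover.
Variable n : nat.
Variable th : rsubst.
Hypothesis Hn : (0 < n)%nat.
Hypothesis Hrs : is_random_subst n th.
Hypothesis Hsc : semi_compatible n th.
Variable p : nat.
Hypothesis Hp1 : (1 <= p)%nat.
Hypothesis Hp : forall i j, (i < n)%nat -> (j < n)%nat -> (0 < mat_pow n (subst_matrix th) p i j)%nat.

(* Every word of [theta^p(a)] contains the letter [a]. *)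
Lemma subst_pow_extend j a v : (a < n)%nat -> In v (subst_pow th j [a]) ->
  exists v', In v' (subst_pow th (j + p) [a]) /\ subword v v'.
Proof.
  intros Ha Hv. destruct (subst_pow_nonempty n th Hrs p [a] (word_on_letter n a Ha)) as [z Hz].
  assert (Hocc : (0 < occ a z)%nat)
    by (rewrite (occ_subst_pow_letter n th Hrs Hsc p a z a Ha Hz); apply Hp; auto).
  assert (Hin : In a z) by (apply (count_occ_In Nat.eq_dec); auto).
  apply in_split in Hin; destruct Hin as [z1 [z2 Ez]].
  assert (HLz : word_on n z) by (eapply word_on_subst_pow; eauto; apply word_on_letter; auto).
  rewrite Ez in HLz. apply word_on_app in HLz; destruct HLz as [HL1 HL2].
  apply word_on_cons in HL2; destruct HL2 as [_ HL2].
  destruct (subst_pow_nonempty n th Hrs j z1 HL1) as [y1 Hy1].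
  destruct (subst_pow_nonempty n th Hrs j z2 HL2) as [y2 Hy2].
  exists (y1 ++ v ++ y2). split.
  - apply in_subst_pow_add. exists z; split; auto. rewrite Ez.
    apply in_subst_pow_app. exists y1, (v ++ y2); split; auto. split; auto.
    apply in_subst_pow_cons. exists v, y2; auto.
  - exists y1, y2; auto.
Qed.

Lemma in_language_deep m w : in_language n th w ->
  exists a j x, (a < n)%nat /\ (m <= j)%nat /\ In x (subst_pow th j [a]) /\ subword w x.
Proof.
  intros [a [j0 [v [Ha [Hv Hs]]]]].
  assert (H : forall t, exists x, In x (subst_pow th (j0 + t * p) [a]) /\ subword w x).
  { induction t.
    - exists v; rewrite Nat.add_0_r; auto.
    - destruct IHt as [x [Hx Hsx]]. destruct (subst_pow_extend _ a x Ha Hx) as [x' [Hx' Hs']].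
      exists x'; split; [|eapply subword_trans; eauto].
      replace (j0 + S t * p)%nat with (j0 + t * p + p)%nat by lia. auto. }
  destruct (H m) as [x [Hx Hsx]]. exists a, (j0 + m * p)%nat, x; repeat split; auto. nia.
Qed.

Variable m : nat.

Definition len_pow_total := nsum n (fun c => len_pow n th m c).

Lemma len_pow_le_total c : (c < n)%nat -> (len_pow n th m c <= len_pow_total)%nat.
Proof. intros; unfold len_pow_total; apply (nsum_ge_term n (fun c => len_pow n th m c)); auto. Qed.

(* Drop leading letters of the seed [v0] until [w] starts within the image of the first one. *)
Lemma trim_prefix w : forall v0 y pre s, word_on n v0 -> In y (subst_pow th m v0) -> pre ++ w ++ s = y ->
  exists v y' pre' s', word_on n v /\ In y' (subst_pow th m v) /\ pre' ++ w ++ s' = y' /\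
    (length pre' <= len_pow_total)%nat /\ (length s' <= length s)%nat.
Proof.
  induction v0 as [|b v0 IH]; intros y pre s Hv Hy E.
  - rewrite subst_pow_nil in Hy; destruct Hy as [<-|[]].
    exists [], [], pre, s. split; [apply word_on_nil|]. split; [rewrite subst_pow_nil; simpl; auto|].
    split; [auto|]. split; [destruct pre; simpl in *; [lia|discriminate]|lia].
  - apply word_on_cons in Hv; destruct Hv as [Hb Hv].
    apply in_subst_pow_cons in Hy; destruct Hy as [B [y1 [-> [HB Hy1]]]].
    assert (HlB : length B = len_pow n th m b) by (eapply length_subst_pow_letter; eauto).
    destruct (le_lt_dec (length pre) (length B)) as [Hle|Hgt].
    + exists (b :: v0), (B ++ y1), pre, s. repeat split; auto.
      * apply word_on_cons; auto.
      * apply in_subst_pow_cons; eauto.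
      * pose proof (len_pow_le_total b Hb); lia.
    + destruct (app_eq_app _ _ _ _ E) as [l [[E1 E2]|[E1 E2]]].
      * destruct (IH y1 l s Hv Hy1) as [v [y' [pre' [s' H]]]]; [auto|]. exists v, y', pre', s'; auto.
      * subst B. rewrite length_app in Hgt. lia.
Qed.

Lemma trim_suffix w : forall v0 y pre s, word_on n v0 -> In y (subst_pow th m v0) -> pre ++ w ++ s = y ->
  exists v y' pre' s', word_on n v /\ In y' (subst_pow th m v) /\ pre' ++ w ++ s' = y' /\
    (length s' <= len_pow_total)%nat /\ (length pre' <= length pre)%nat.
Proof.
  induction v0 as [|b v0 IH] using rev_ind; intros y pre s Hv Hy E.
  - rewrite subst_pow_nil in Hy; destruct Hy as [<-|[]].
    exists [], [], pre, s. split; [apply word_on_nil|]. split; [rewrite subst_pow_nil; simpl; auto|].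
    split; [auto|]. split; [|lia]. destruct s; [simpl; lia|]. destruct pre; destruct w; simpl in *; discriminate.
  - apply word_on_app in Hv; destruct Hv as [Hv Hb]. apply word_on_cons in Hb; destruct Hb as [Hb _].
    apply in_subst_pow_app in Hy; destruct Hy as [y1 [B [-> [Hy1 HB]]]].
    assert (HlB : length B = len_pow n th m b) by (eapply length_subst_pow_letter; eauto).
    destruct (le_lt_dec (length s) (length B)) as [Hle|Hgt].
    + exists (v0 ++ [b]), (y1 ++ B), pre, s. repeat split; auto.
      * apply word_on_app; split; auto. apply word_on_letter; auto.
      * apply in_subst_pow_app; eauto.
      * pose proof (len_pow_le_total b Hb); lia.
    + rewrite app_assoc in E. destruct (app_eq_app _ _ _ _ E) as [l [[E1 E2]|[E1 E2]]].
      * subst B. rewrite length_app in Hgt. lia.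
      * rewrite <- app_assoc in E1.
        destruct (IH y1 pre l Hv Hy1) as [v [y' [pre' [s' H]]]]; [auto|]. exists v, y', pre', s'; auto.
Qed.

Lemma in_language_cover w : in_language n th w ->
  exists v y o, word_on n v /\ In y (subst_pow th m v) /\ (o <= len_pow_total)%nat /\
    (len_pow_word n th m v <= length w + 2 * len_pow_total)%nat /\ w = firstn (length w) (skipn o y).
Proof.
  intros Hw. destruct (in_language_deep m w Hw) as [a [j [x [Ha [Hj [Hx [pre [s E]]]]]]]].
  replace j with (m + (j - m))%nat in Hx by lia.
  apply in_subst_pow_add in Hx; destruct Hx as [v0 [Hv0 Hx]].
  assert (HL0 : word_on n v0) by (eapply word_on_subst_pow; eauto; apply word_on_letter; auto).
  destruct (trim_prefix w v0 x pre s HL0 Hx E) as [v1 [y1 [pre1 [s1 [HL1 [Hy1 [E1 [Hpre1 _]]]]]]]].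
  destruct (trim_suffix w v1 y1 pre1 s1 HL1 Hy1 E1) as [v2 [y2 [pre2 [s2 [HL2 [Hy2 [E2 [Hs2 Hp2]]]]]]]].
  exists v2, y2, (length pre2). repeat split; auto.
  - lia.
  - rewrite <- (length_subst_pow n th Hrs Hsc m v2 y2 HL2 Hy2), <- E2, !length_app. lia.
  - rewrite <- E2. rewrite skipn_app, skipn_all, Nat.sub_diag; simpl.
    rewrite firstn_app, firstn_all, Nat.sub_diag; simpl. rewrite app_nil_r; auto.
Qed.

Lemma card_subst_pow_le_exp beta v :
  (forall c, (c < n)%nat -> log_card_pow th m c <= beta * INR (len_pow n th m c)) -> word_on n v ->
  INR (card_set (subst_pow th m v)) <= exp (beta * INR (len_pow_word n th m v)).
Proof.
  intros HE; induction v as [|a v IH]; intros Hv.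
  - rewrite subst_pow_nil; unfold card_set; simpl. rewrite Rmult_0_r, exp_0; lra.
  - apply word_on_cons in Hv; destruct Hv as [Ha Hv].
    rewrite (card_subst_pow_cons n th Hrs Hsc m a v Ha). simpl len_pow_word.
    rewrite mult_INR, plus_INR, Rmult_plus_distr_l, exp_plus.
    apply Rmult_le_compat; try apply pos_INR; auto.
    rewrite <- (exp_ln (INR (card_pow th m a))) by (apply lt_0_INR, (card_pow_pos n th Hrs); auto).
    destruct (Rle_lt_or_eq_dec _ _ (HE a Ha)) as [H|H];
      [left; apply exp_increasing; auto|right; unfold log_card_pow in H; rewrite H; auto].
Qed.

Lemma len_pow_word_lb B v : (forall c, (c < n)%nat -> (B <= len_pow n th m c)%nat) -> word_on n v ->
  (B * length v <= len_pow_word n th m v)%nat.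
Proof.
  intros HB; induction v as [|a v IH]; intros Hv; simpl; [lia|].
  apply word_on_cons in Hv; destruct Hv as [Ha Hv]. specialize (IH Hv). specialize (HB a Ha). nia.
Qed.

Variable k : nat.
Variable B : nat.
Hypothesis HB1 : (1 <= B)%nat.
Hypothesis HB : forall c, (c < n)%nat -> (B <= len_pow n th m c)%nat.

Definition seed_length_max := ((k + 2 * len_pow_total) / B)%nat.

Definition cover_seeds : list (list nat) :=
  filter (fun v => Nat.leb (len_pow_word n th m v) (k + 2 * len_pow_total))
    (flat_map (words_of_length n) (seq 0 (S seed_length_max))).

Definition cover_candidates : list (list nat) :=
  flat_map (fun v => flat_map (fun y => map (fun o => firstn k (skipn o y)) (seq 0 (S len_pow_total)))
                       (nodup (list_eq_dec Nat.eq_dec) (subst_pow th m v)))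
    cover_seeds.

Lemma lang_card_le_candidates : (lang_card n th k <= length cover_candidates)%nat.
Proof.
  unfold lang_card. apply NoDup_incl_length; [apply lang_list_NoDup|].
  intros w Hw. apply (in_lang_list n th Hrs) in Hw; destruct Hw as [Hw Hk].
  destruct (in_language_cover w Hw) as [v [y [o [Hv [Hy [Ho [Hl Ew]]]]]]].
  apply in_flat_map. exists v; split.
  - apply filter_In; split; [|apply Nat.leb_le; lia].
    apply in_flat_map; exists (length v); split; [|apply in_words_of_length; auto].
    apply in_seq. split; [lia|]. simpl. assert (length v <= seed_length_max)%nat; [|lia].
    apply Nat.div_le_lower_bound; [lia|]. pose proof (len_pow_word_lb B v HB Hv). lia.
  - apply in_flat_map; exists y; split; [apply nodup_In; auto|]. apply in_map_iff; exists o; split.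
    + symmetry. rewrite Ew at 1. rewrite Hk; auto.
    + apply in_seq; lia.
Qed.

Lemma length_cover_seeds : INR (length cover_seeds) <= INR (2 * n) ^ seed_length_max.
Proof.
  set (T := seed_length_max).
  apply Rle_trans with (INR (S T * n ^ T)).
  - apply le_INR. eapply Nat.le_trans; [apply filter_length_le|].
    eapply Nat.le_trans; [apply (length_flat_map_le _ _ (n ^ T))|].
    + intros t Ht. apply in_seq in Ht. rewrite length_words_of_length. apply Nat.pow_le_mono_r; lia.
    + rewrite length_seq; lia.
  - rewrite <- pow_INR. apply le_INR. rewrite Nat.pow_mul_l. apply Nat.mul_le_mono_r.
    clear. induction T; simpl; lia.
Qed.

Lemma lang_card_upper beta : 0 <= beta ->
  (forall c, (c < n)%nat -> log_card_pow th m c <= beta * INR (len_pow n th m c)) ->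
  INR (lang_card n th k) <= INR (2 * n) ^ seed_length_max *
    (INR (S len_pow_total) * exp (beta * INR (k + 2 * len_pow_total))).
Proof.
  intros Hb HE. set (Lm := len_pow_total).
  apply Rle_trans with (INR (length cover_candidates)); [apply le_INR, lang_card_le_candidates|].
  unfold cover_candidates.
  eapply Rle_trans; [apply (length_flat_map_le_R _ _ (INR (S Lm) * exp (beta * INR (k + 2 * Lm))))|].
  - intros v Hv. apply filter_In in Hv; destruct Hv as [Hv Hl]. apply Nat.leb_le in Hl.
    apply in_flat_map in Hv; destruct Hv as [t [_ Hv]]. apply in_words_of_length in Hv; destruct Hv as [_ Hv].
    eapply Rle_trans; [apply (length_flat_map_le_R _ _ (INR (S Lm)))|].
    + intros y _. rewrite length_map, length_seq. apply Rle_refl.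
    + rewrite Rmult_comm. apply Rmult_le_compat_l; [apply pos_INR|].
      eapply Rle_trans; [apply card_subst_pow_le_exp; auto|].
      destruct (Rle_lt_or_eq_dec _ _ (Rmult_le_compat_l beta _ _ Hb (le_INR _ _ Hl))) as [H|H];
        [left; apply exp_increasing; auto|right; rewrite H; auto].
  - apply Rmult_le_compat_r; [|apply length_cover_seeds].
    apply Rmult_le_pos; [apply pos_INR|left; apply exp_pos].
Qed.

End Cover.

Section LetterEntropy.
Variable n : nat.
Variable th : rsubst.
Hypothesis Hn : (0 < n)%nat.
Hypothesis Hrs : is_random_subst n th.
Hypothesis Hsc : semi_compatible n th.
Variable lam : R.
Variable Rv : nat -> R.
Hypothesis Hprim : primitive_mx n (subst_matrix th).
Hypothesis HPF : PF_pair n (subst_matrix th) lam Rv.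
Notation M := (subst_matrix th).

Definition len_powR m c := INR (len_pow n th m c).

Definition letter_entropy_tends (rho : R) : Prop :=
  forall c, (c < n)%nat ->
    ratio_tends (fun m => log_card_pow th m c) (fun m => len_powR m c) rho.

Lemma len_powR_pos m c : (c < n)%nat -> 0 < len_powR m c.
Proof. intros; apply lt_0_INR, (len_pow_pos n th Hrs Hsc); auto. Qed.

Lemma len_powR_orbit : is_orbit n M len_powR.
Proof.
  intros m c Hc. unfold len_powR. rewrite len_pow_S, INR_nsum.
  apply rsum_ext; intros; rewrite mult_INR; auto.
Qed.

Lemma len_powR_succ_orbit : is_orbit n M (fun m c => len_powR (S m) c).
Proof. intros m c Hc; apply len_powR_orbit; auto. Qed.

Lemma pf_pairing_len_powR_0 : pf_pairing n Rv len_powR 0 = 1.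
Proof.
  unfold pf_pairing. rewrite <- (proj1 (proj2 HPF)). apply rsum_ext; intros c Hc.
  unfold len_powR; rewrite len_pow_0; simpl; auto; ring.
Qed.

Lemma pf_pairing_len_powR_1 : pf_pairing n Rv (fun m c => len_powR (S m) c) 0 = lam.
Proof.
  change (pf_pairing n Rv (fun m c => len_powR (S m) c) 0) with (pf_pairing n Rv len_powR 1).
  rewrite (pf_pairing_S n M lam Rv HPF len_powR 0 len_powR_orbit), pf_pairing_len_powR_0. ring.
Qed.

Lemma len_powR_ratio c : (c < n)%nat ->
  ratio_tends (fun m => len_powR (S m) c) (fun m => len_powR m c) lam.
Proof.
  intros Hc. rewrite <- (Rdiv_1_r lam), <- pf_pairing_len_powR_0 at 1.
  rewrite <- pf_pairing_len_powR_1.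
  exact (orbit_ratio_tends n M lam Rv Hn HPF _ _ len_powR_succ_orbit len_powR_orbit
           (fun m c Hc => len_powR_pos m c Hc) Hprim c Hc).
Qed.

Lemma len_powR_unbounded c : (c < n)%nat -> 1 < lam -> unbounded (fun m => len_powR m c).
Proof.
  intros Hc Hl. apply (ratio_tends_succ_unbounded _ lam); auto using len_powR_ratio.
  intros; apply len_powR_pos; auto.
Qed.

Lemma pf_pairing_q1_nonneg : 0 <= rsum n (fun i => q1 th i * Rv i).
Proof.
  apply rsum_nonneg; intros i Hi. apply Rmult_le_pos.
  - apply ln_nonneg_nat, (length_th_pos n); auto.
  - left; apply (proj1 HPF); auto.
Qed.

Lemma letter_entropy_identical : identical_set_cond n th ->
  letter_entropy_tends (/ lam * rsum n (fun i => q1 th i * Rv i)).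
Proof.
  intros HI c Hc. apply ratio_tends_shift.
  replace (/ lam * rsum n (fun i => q1 th i * Rv i)) with
    (pf_pairing n Rv (fun m c => log_card_pow th (S m) c) 0 /
     pf_pairing n Rv (fun m c => len_powR (S m) c) 0).
  - assert (Hx : is_orbit n M (fun m c => log_card_pow th (S m) c))
      by (intros m c' Hc'; apply (log_card_pow_identical n th Hrs Hsc); auto; lia).
    exact (orbit_ratio_tends n M lam Rv Hn HPF _ _ Hx len_powR_succ_orbit
             (fun m c Hc => len_powR_pos (S m) c Hc) Hprim c Hc).
  - rewrite pf_pairing_len_powR_1. unfold pf_pairing, Rdiv. rewrite Rmult_comm. f_equal.
    apply rsum_ext; intros i Hi. rewrite (log_card_pow_1 n th Hrs) by auto. ring.
Qed.

Definition q1_orbit m c := rsum n (fun i => INR (mat_pow n M m i c) * q1 th i).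

Lemma log_card_pow_disjoint_sum : disjoint_set_cond n th -> forall m c, (c < n)%nat ->
  log_card_pow th m c = rsum m (fun j => q1_orbit j c).
Proof.
  intros HD m. induction m; intros c Hc.
  - apply log_card_pow_0.
  - rewrite (log_card_pow_disjoint n th Hrs Hsc m c HD Hc), rsum_shift.
    f_equal; [unfold q1_orbit; symmetry; apply rsum_mat_pow_0; auto|].
    rewrite (rsum_ext n (fun i => INR (M i c) * log_card_pow th m i)
      (fun i => rsum m (fun j => INR (M i c) * q1_orbit j i))).
    + rewrite rsum_swap. apply rsum_ext; intros j _.
      symmetry; apply (orbit_of_vector n M (q1 th) j c Hc).
    + intros i Hi; rewrite IHm, <- rsum_scal; auto.
Qed.

Lemma letter_entropy_disjoint : disjoint_set_cond n th -> 1 < lam ->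
  letter_entropy_tends (/ (lam - 1) * rsum n (fun i => q1 th i * Rv i)).
Proof.
  intros HD Hl c Hc. rewrite Rmult_comm.
  apply (ratio_tends_telescope _ (fun m => q1_orbit m c)); auto using pf_pairing_q1_nonneg.
  - intros m. rewrite !(log_card_pow_disjoint_sum HD) by auto. reflexivity.
  - intros m; apply (log_card_pow_nonneg n); auto.
  - intros m; apply len_powR_pos; auto.
  - replace (rsum n (fun i => q1 th i * Rv i)) with
      (pf_pairing n Rv q1_orbit 0 / pf_pairing n Rv len_powR 0).
    + exact (orbit_ratio_tends n M lam Rv Hn HPF _ _ (orbit_of_vector n M (q1 th)) len_powR_orbit
               (fun m c Hc => len_powR_pos m c Hc) Hprim c Hc).
    + rewrite pf_pairing_len_powR_0, Rdiv_1_r. unfold pf_pairing. apply rsum_ext; intros i Hi.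
      unfold q1_orbit. rewrite rsum_mat_pow_0 by auto. ring.
  - apply len_powR_ratio; auto.
Qed.

End LetterEntropy.

Section Subadditive.
Variable s : nat -> R.
Variable C : R.
Hypothesis s_nonneg : forall l, 0 <= s l.
Hypothesis s_subadd : forall l k, s (l + k) <= s l + s k.
Hypothesis s_le_lin : forall r, s r <= INR r * C.

Lemma subadd_C_nonneg : 0 <= C.
Proof. pose proof (s_nonneg 1) as H0. pose proof (s_le_lin 1) as H1. simpl in H1. lra. Qed.

Lemma subadd_mult q l r : s (q * l + r) <= INR q * s l + s r.
Proof.
  induction q; [simpl; pose proof (s_nonneg r); lra|]. cbn [Nat.mul].
  replace (l + q * l + r)%nat with (l + (q * l + r))%nat by lia.
  eapply Rle_trans; [apply s_subadd|]. rewrite S_INR. lra.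
Qed.

Lemma subadd_euclid K l : (1 <= l)%nat ->
  s K <= INR (K / l) * s l + INR l * C /\ INR (K / l) * INR l <= INR K.
Proof.
  intros Hl. pose proof (Nat.div_mod K l ltac:(lia)) as Hdm.
  pose proof (Nat.mod_upper_bound K l ltac:(lia)) as Hmod.
  pose proof (subadd_mult (K / l) l (K mod l)) as Hm. rewrite <- Nat.mul_comm, <- Hdm in Hm.
  pose proof (s_le_lin (K mod l)) as Hs. pose proof subadd_C_nonneg.
  assert (Hr : INR (K mod l) <= INR l) by (apply le_INR; lia).
  assert (HK : INR K = INR (K / l) * INR l + INR (K mod l))
    by (rewrite Hdm at 1; rewrite plus_INR, mult_INR; ring).
  pose proof (pos_INR (K mod l)).
  split; [|lra].
  assert (INR (K mod l) * C <= INR l * C) by (apply Rmult_le_compat_r; lra). lra.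
Qed.

Lemma subadd_lower rho eps : 0 < eps ->
  (forall B, exists K, B <= INR K /\ (rho - eps / 2) * INR K <= s K) ->
  forall l, (1 <= l)%nat -> (rho - eps) * INR l <= s l.
Proof.
  intros Heps Hfreq l Hl.
  destruct (Rle_lt_dec ((rho - eps) * INR l) (s l)) as [H|H]; auto. exfalso.
  pose proof (s_nonneg l). assert (Hl' : 1 <= INR l) by (apply (le_INR 1); auto).
  assert (Hre : 0 < rho - eps) by nra.
  destruct (Hfreq (2 * INR l * C / eps + 1)) as [K [HK HsK]].
  destruct (subadd_euclid K l Hl) as [Hsub Hq].
  pose proof (pos_INR (K / l)).
  assert (INR (K / l) * s l <= (rho - eps) * INR K).
  { apply Rle_trans with (INR (K / l) * ((rho - eps) * INR l)); [apply Rmult_le_compat_l; lra|].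
    replace (INR (K / l) * ((rho - eps) * INR l)) with ((rho - eps) * (INR (K / l) * INR l)) by ring.
    apply Rmult_le_compat_l; lra. }
  assert (2 * INR l * C / eps * (eps / 2) = INR l * C) by (field; lra).
  assert ((2 * INR l * C / eps + 1) * (eps / 2) <= INR K * (eps / 2)) by (apply Rmult_le_compat_r; lra).
  lra.
Qed.

Lemma subadd_upper rho eps k : 0 < eps -> (1 <= k)%nat -> s k <= (rho + eps / 2) * INR k ->
  eventually (fun l => s l <= (rho + eps) * INR l).
Proof.
  intros Heps Hk1 Hk. pose proof subadd_C_nonneg.
  destruct (INR_unbounded (2 * INR k * C / eps)) as [N HN].
  exists N. intros l Hl.
  destruct (subadd_euclid l k Hk1) as [Hsub Hq].
  pose proof (pos_INR (l / k)). assert (INR N <= INR l) by (apply le_INR; lia).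
  assert (INR (l / k) * s k <= (rho + eps / 2) * (INR (l / k) * INR k)).
  { replace ((rho + eps / 2) * (INR (l / k) * INR k)) with (INR (l / k) * ((rho + eps / 2) * INR k)) by ring.
    apply Rmult_le_compat_l; lra. }
  assert (2 * INR k * C / eps * (eps / 2) = INR k * C) by (field; lra).
  assert (2 * INR k * C / eps * (eps / 2) <= INR l * (eps / 2)) by (apply Rmult_le_compat_r; lra).
  assert (Hr : 0 <= rho + eps / 2).
  { pose proof (s_nonneg k). assert (1 <= INR k) by (apply (le_INR 1); auto). nra. }
  assert ((rho + eps / 2) * (INR (l / k) * INR k) <= (rho + eps / 2) * INR l)
    by (apply Rmult_le_compat_l; lra).
  lra.
Qed.

End Subadditive.

Lemma Un_cv_div_of_bounds (s : nat -> R) rho :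
  (forall eps, 0 < eps -> forall l, (1 <= l)%nat -> (rho - eps) * INR l <= s l) ->
  (forall eps, 0 < eps -> eventually (fun l => s l <= (rho + eps) * INR l)) ->
  Un_cv (fun l => s l / INR l) rho.
Proof.
  intros Hlo Hup eps Heps. destruct (Hup (eps / 2) ltac:(lra)) as [N HN].
  exists (Nat.max N 1). intros l Hl. unfold Rdist.
  assert (Hl0 : 1 <= INR l) by (apply (le_INR 1); lia).
  pose proof (HN l ltac:(lia)). pose proof (Hlo (eps / 2) ltac:(lra) l ltac:(lia)).
  assert (Hd : s l / INR l * INR l = s l) by (field; lra).
  assert (s l / INR l <= rho + eps / 2) by (apply Rmult_le_reg_r with (INR l); [lra|]; rewrite Hd; lra).
  assert (rho - eps / 2 <= s l / INR l) by (apply Rmult_le_reg_r with (INR l); [lra|]; rewrite Hd; lra).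
  apply Rabs_def1; lra.
Qed.

Section Entropy.
Variable n : nat.
Variable th : rsubst.
Hypothesis Hn : (0 < n)%nat.
Hypothesis Hrs : is_random_subst n th.
Hypothesis Hsc : semi_compatible n th.
Variable lam : R.
Variable Rv : nat -> R.
Hypothesis Hprim : primitive_mx n (subst_matrix th).
Hypothesis HPF : PF_pair n (subst_matrix th) lam Rv.
Hypothesis Hlam : 1 < lam.

Definition log_lang_card l := ln (INR (lang_card n th l)).

Lemma long_len_pow B : eventually (fun m => forall c, (c < n)%nat -> B <= len_powR n th m c).
Proof. apply eventually_forall_lt; intros c Hc; apply (len_powR_unbounded n th Hn Hrs Hsc lam Rv); auto. Qed.

Lemma lang_card_pos l : (1 <= lang_card n th l)%nat.
Proof.
  destruct (long_len_pow (INR l)) as [m Hm]. specialize (Hm m (le_n m) 0%nat Hn).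
  apply INR_le in Hm.
  destruct (subst_pow_nonempty n th Hrs m [0%nat] (word_on_letter n 0 Hn)) as [x Hx].
  assert (length x = len_pow n th m 0) by (eapply length_subst_pow_letter; eauto).
  assert (Hin : In (firstn l x) (lang_list n th l)).
  { apply (in_lang_list n th Hrs). split.
    - eapply in_language_subword; [eapply in_language_subst_pow; eauto|apply subword_firstn].
    - rewrite length_firstn; lia. }
  unfold lang_card. destruct (lang_list n th l); [destruct Hin|simpl; lia].
Qed.

Lemma lang_cardR_pos l : 0 < INR (lang_card n th l).
Proof. apply lt_0_INR; pose proof (lang_card_pos l); lia. Qed.

Lemma log_lang_card_nonneg l : 0 <= log_lang_card l.
Proof. apply ln_nonneg_nat, lang_card_pos. Qed.

Lemma log_lang_card_subadd l k : log_lang_card (l + k) <= log_lang_card l + log_lang_card k.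
Proof.
  unfold log_lang_card. rewrite <- ln_mult by apply lang_cardR_pos.
  apply ln_le_mono; [apply lang_cardR_pos|]. rewrite <- mult_INR. apply le_INR, lang_card_submult; auto.
Qed.

Lemma log_lang_card_le_lin r : log_lang_card r <= INR r * ln (INR n).
Proof.
  unfold log_lang_card. rewrite <- ln_pow by (apply lt_0_INR; lia).
  apply ln_le_mono; [apply lang_cardR_pos|]. rewrite <- pow_INR. apply le_INR, lang_card_le_pow; auto.
Qed.

Lemma log_card_pow_le_log_lang_card m c : (c < n)%nat ->
  log_card_pow th m c <= log_lang_card (len_pow n th m c).
Proof.
  intros Hc. apply ln_le_mono; [apply lt_0_INR; pose proof (card_pow_pos n th Hrs m c Hc); lia|].
  apply le_INR, card_pow_le_lang_card; auto.
Qed.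

Lemma log_lang_card_cover_bound m B beta : (1 <= B)%nat -> 0 <= beta ->
  (forall c, (c < n)%nat -> (B <= len_pow n th m c)%nat) ->
  (forall c, (c < n)%nat -> log_card_pow th m c <= beta * INR (len_pow n th m c)) ->
  forall k, log_lang_card k <=
    INR (k + 2 * len_pow_total n th m) / INR B * ln (INR (2 * n)) +
    ln (INR (S (len_pow_total n th m))) + beta * INR (k + 2 * len_pow_total n th m).
Proof.
  intros HB1 Hb HB HE k. destruct Hprim as [p [Hp1 Hp]].
  set (Lm := len_pow_total n th m). set (T := seed_length_max n th m k B).
  pose proof (lang_card_upper n th Hn Hrs Hsc p Hp1 Hp m k B HB1 HB beta Hb HE) as Hu. fold Lm T in Hu.
  assert (HBp : 0 < INR B) by (apply lt_0_INR; lia).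
  assert (HT : INR T <= INR (k + 2 * Lm) / INR B).
  { apply Rmult_le_reg_r with (INR B); [lra|]. unfold Rdiv. rewrite Rmult_assoc, Rinv_l, Rmult_1_r by lra.
    rewrite <- mult_INR. apply le_INR. unfold T, seed_length_max. rewrite Nat.mul_comm. apply Nat.Div0.mul_div_le. }
  assert (H2n : 0 < INR (2 * n)) by (apply lt_0_INR; lia).
  assert (Hln2n : 0 <= ln (INR (2 * n))) by (apply ln_nonneg_nat; lia).
  unfold log_lang_card. eapply Rle_trans; [apply ln_le_mono; [apply lang_cardR_pos|apply Hu]|].
  rewrite !ln_mult, ln_pow, ln_exp; try apply pow_lt; try apply exp_pos; try (apply lt_0_INR; lia);
    [|apply Rmult_lt_0_compat; [apply lt_0_INR; lia|apply exp_pos]].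
  assert (INR T * ln (INR (2 * n)) <= INR (k + 2 * Lm) / INR B * ln (INR (2 * n)))
    by (apply Rmult_le_compat_r; auto). lra.
Qed.

Variable rho : R.
Hypothesis Hrho : 0 <= rho.
Hypothesis Hletter : letter_entropy_tends n th rho.

Lemma log_lang_card_frequently_large eps : 0 < eps ->
  forall B, exists K, B <= INR K /\ (rho - eps) * INR K <= log_lang_card K.
Proof.
  intros Heps B. destruct (eventually_and _ _ (Hletter 0%nat Hn eps Heps) (long_len_pow B)) as [m Hm].
  destruct (Hm m (le_n m)) as [[HE _] HB]. exists (len_pow n th m 0); split; [apply HB; auto|].
  eapply Rle_trans; [apply HE|apply log_card_pow_le_log_lang_card; auto].
Qed.

Lemma log_lang_card_upper_witness eps : 0 < eps ->
  exists k, (1 <= k)%nat /\ log_lang_card k <= (rho + eps) * INR k.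
Proof.
  intros Heps. set (e := eps / 3).
  assert (He : 0 < e) by (unfold e; lra).
  assert (Hln2 : 0 <= ln (INR (2 * n))) by (apply ln_nonneg_nat; lia).
  destruct (INR_unbounded (ln (INR (2 * n)) / e)) as [B0 HB0]. set (B := S B0).
  assert (HBr : ln (INR (2 * n)) / INR B <= e).
  { assert (HB : 0 < INR B) by (unfold B; apply lt_0_INR; lia).
    apply Rmult_le_reg_r with (INR B); [lra|]. unfold Rdiv. rewrite Rmult_assoc, Rinv_l, Rmult_1_r by lra.
    assert (ln (INR (2 * n)) / e * e = ln (INR (2 * n))) by (field; lra).
    assert (INR B0 <= INR B) by (apply le_INR; unfold B; lia).
    assert (ln (INR (2 * n)) / e * e <= INR B * e) by (apply Rmult_le_compat_r; lra). lra. }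
  set (beta := rho + e).
  destruct (eventually_and _ _ (eventually_forall_lt n _ (fun c Hc => Hletter c Hc e He))
    (long_len_pow (INR B))) as [m Hm].
  destruct (Hm m (le_n m)) as [HE HB].
  pose proof (log_lang_card_cover_bound m B beta ltac:(unfold B; lia) ltac:(unfold beta; lra)
    (fun c Hc => INR_le _ _ (HB c Hc)) (fun c Hc => proj2 (HE c Hc))) as Hcov.
  set (Lm := len_pow_total n th m) in Hcov.
  set (C0 := INR (2 * Lm) * (e + beta) + ln (INR (S Lm))).
  destruct (INR_unbounded (C0 / e)) as [k0 Hk0]. set (k := S k0).
  exists k. split; [unfold k; lia|].
  specialize (Hcov k).
  assert (Hk : C0 <= e * INR k).
  { unfold k. rewrite S_INR. assert (C0 / e * e = C0) by (field; lra).
    assert (C0 / e * e <= INR k0 * e) by (apply Rmult_le_compat_r; lra). lra. }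
  assert (HBk : INR (k + 2 * Lm) / INR B * ln (INR (2 * n)) <= INR (k + 2 * Lm) * e).
  { unfold Rdiv. rewrite Rmult_assoc. apply Rmult_le_compat_l; [apply pos_INR|].
    rewrite Rmult_comm; exact HBr. }
  unfold C0, beta, e in *. rewrite !plus_INR, !mult_INR in *. simpl (INR 2) in *. lra.
Qed.

Lemma top_entropy_of_letter_entropy : top_entropy n th rho.
Proof.
  assert (Hlim : Un_cv (fun l => log_lang_card l / INR l) rho).
  { apply Un_cv_div_of_bounds.
    - intros eps Heps. apply (subadd_lower log_lang_card (ln (INR n))); auto using log_lang_card_nonneg,
        log_lang_card_subadd, log_lang_card_le_lin.
      apply log_lang_card_frequently_large; lra.
    - intros eps Heps. destruct (log_lang_card_upper_witness (eps / 2) ltac:(lra)) as [k [Hk1 Hk]].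
      apply (subadd_upper log_lang_card (ln (INR n))) with k; auto using log_lang_card_nonneg,
        log_lang_card_subadd, log_lang_card_le_lin. }
  split.
  - exists (lang_card n th). intros l; apply (card_lang_lang_card n th Hrs).
  - intros c Hc eps Heps. destruct (Hlim eps Heps) as [N HN]. exists N. intros l Hl.
    rewrite (card_lang_unique n th Hrs l (c l) (Hc l)). apply HN; auto.
Qed.

End Entropy.

Lemma ln_0 : ln 0 = 0.
Proof. unfold ln. destruct (Rlt_dec 0 0) as [H|H]; [exfalso; exact (Rlt_irrefl 0 H)|reflexivity]. Qed.

Lemma length_NoDup_all_equal (l : list (list nat)) :
  NoDup l -> (forall x y, In x l -> In y l -> x = y) -> (length l <= 1)%nat.
Proof.
  intros HN H. destruct l as [|x l']; [simpl; lia|].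
  change 1%nat with (length [x]). apply NoDup_incl_length; auto.
  intros y Hy. left. symmetry. apply H; simpl; auto.
Qed.

Section Degenerate.
Variable n : nat.
Variable th : rsubst.
Hypothesis Hrs : is_random_subst n th.
Hypothesis Hsc : semi_compatible n th.
Variable lam : R.
Variable Rv : nat -> R.
Hypothesis HPF : PF_pair n (subst_matrix th) lam Rv.
Hypothesis Hl : lam <= 1.

(* [lam - 1] is a positive combination of the [|theta(c)| - 1 >= 0], so [lam <= 1] forces
   [theta] to send letters to letters. *)
Lemma len_pow_1_degenerate c : (c < n)%nat -> len_pow n th 1 c = 1%nat.
Proof.
  intros Hc.
  assert (Hdecomp : lam - 1 = rsum n (fun c => Rv c * (len_powR n th 1 c - 1))).
  { rewrite <- (pf_pairing_len_powR_1 n th lam Rv HPF). unfold pf_pairing.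
    rewrite (rsum_ext n (fun c => Rv c * (len_powR n th 1 c - 1))
      (fun c => Rv c * len_powR n th 1 c + (-1) * Rv c)) by (intros; ring).
    rewrite rsum_add, rsum_scal, (proj1 (proj2 HPF)). ring. }
  assert (Hnn : forall c, (c < n)%nat -> 0 <= Rv c * (len_powR n th 1 c - 1)).
  { intros c' Hc'. apply Rmult_le_pos; [left; apply (proj1 HPF); auto|].
    pose proof (len_pow_pos n th Hrs Hsc 1 c' Hc'). unfold len_powR.
    apply (le_INR 1) in H. simpl in H. lra. }
  pose proof (rsum_ge_term n _ c Hnn Hc) as H1. rewrite <- Hdecomp in H1.
  pose proof (Hnn c Hc). pose proof (proj1 HPF c Hc).
  assert (len_powR n th 1 c = 1) by nra.
  apply INR_eq; auto.
Qed.

Lemma len_pow_degenerate m c : (c < n)%nat -> len_pow n th m c = 1%nat.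
Proof.
  revert c; induction m; intros c Hc.
  - apply len_pow_0; auto.
  - rewrite len_pow_S, <- (len_pow_1_degenerate c Hc), len_pow_S.
    apply nsum_ext; intros i Hi. rewrite IHm, len_pow_0; auto.
Qed.

Lemma q1_degenerate c : (c < n)%nat -> q1 th c = 0.
Proof.
  intros Hc. unfold q1. replace (length (th c)) with 1%nat; [simpl; apply ln_1|].
  assert (Hlen : forall w, In w (th c) -> length w = 1%nat).
  { intros w Hw. rewrite <- (len_pow_1_degenerate c Hc). eapply length_subst_pow_letter; eauto.
    apply in_subst_pow_S_letter. exists w; simpl; auto. }
  apply Nat.le_antisymm; [apply (length_th_pos n); auto|].
  apply length_NoDup_all_equal; [apply (Hrs c Hc)|]. intros x y Hx Hy.
  pose proof (Hlen x Hx) as Lx. pose proof (Hlen y Hy) as Ly.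
  destruct x as [|b [|]]; simpl in Lx; try lia. destruct y as [|b' [|]]; simpl in Ly; try lia.
  pose proof (Hsc c Hc [b] [b'] Hx Hy b) as Ho. rewrite !occ_cons, Nat.eqb_refl in Ho.
  unfold occ in Ho; simpl in Ho. destruct (Nat.eqb_spec b b'); [subst; auto|discriminate].
Qed.

Lemma in_language_degenerate w : in_language n th w -> (length w <= 1)%nat.
Proof.
  intros [a [m [v [Ha [Hv [pre [s E]]]]]]].
  assert (length v = 1%nat) by (rewrite <- (len_pow_degenerate m a Ha); eapply length_subst_pow_letter; eauto).
  rewrite <- E in H. rewrite !length_app in H. lia.
Qed.

(* For [l >= 2] the language has no word of length [l], and [ln 0 = 0] in Rocq. *)
Lemma top_entropy_degenerate : top_entropy n th 0.
Proof.
  split.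
  - exists (lang_card n th). intros l; apply (card_lang_lang_card n th Hrs).
  - intros c Hc eps Heps. exists 2%nat. intros l Hl2.
    rewrite (card_lang_unique n th Hrs l (c l) (Hc l)).
    assert (Hempty : lang_card n th l = 0%nat).
    { unfold lang_card. destruct (lang_list n th l) as [|w L] eqn:E; auto.
      assert (Hw : In w (lang_list n th l)) by (rewrite E; simpl; auto).
      apply (in_lang_list n th Hrs) in Hw. destruct Hw as [Hw Hlw]. apply in_language_degenerate in Hw. lia. }
    rewrite Hempty. simpl INR. rewrite ln_0. unfold Rdist, Rdiv. rewrite Rmult_0_l, Rminus_0_r, Rabs_R0. lra.
Qed.

End Degenerate.

Theorem mainTheorem9 (n : nat) (th : rsubst) (lam : R) (Rv : nat -> R) :
  (0 < n)%nat ->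
  is_random_subst n th ->
  semi_compatible n th ->
  primitive_mx n (subst_matrix th) ->
  PF_pair n (subst_matrix th) lam Rv ->
  (identical_set_cond n th ->
     top_entropy n th (/ lam * rsum n (fun i => q1 th i * Rv i))) /\
  (disjoint_set_cond n th ->
     top_entropy n th (/ (lam - 1) * rsum n (fun i => q1 th i * Rv i))).
Proof.
  intros Hn Hrs Hsc Hprim HPF.
  destruct (Rle_lt_dec lam 1) as [Hl|Hl].
  - assert (Hq : rsum n (fun i => q1 th i * Rv i) = 0)
      by (apply rsum_zero; intros i Hi; rewrite (q1_degenerate n th Hrs Hsc lam Rv HPF Hl); auto; ring).
    rewrite Hq, !Rmult_0_r.
    split; intros _; apply (top_entropy_degenerate n th Hrs Hsc lam Rv HPF Hl).
  - pose proof (pf_pairing_q1_nonneg n th Hrs lam Rv HPF) as Hq.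
    split; intros Hcond; apply (top_entropy_of_letter_entropy n th Hn Hrs Hsc lam Rv Hprim HPF Hl).
    + apply Rmult_le_pos; [left; apply Rinv_0_lt_compat|]; lra.
    + apply (letter_entropy_identical n th Hn Hrs Hsc lam Rv Hprim HPF Hcond).
    + apply Rmult_le_pos; [left; apply Rinv_0_lt_compat|]; lra.
    + apply (letter_entropy_disjoint n th Hn Hrs Hsc lam Rv Hprim HPF Hcond Hl).
Qed.
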